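(* Let $\mathcal{R}$ be a left-linear conditional term rewriting system, $\mathcal{A}$ a lattice tree automaton and $E$ a set of linear (approximation) equations. If the completion of $\mathcal{A}$ by $\mathcal{R}$ and $E$ terminates on an automaton $\mathcal{A}^*_{\mathcal{R},E}$, then $\mathcal{L}(\mathcal{A}^*_{\mathcal{R},E})\supseteq\mathcal{R}^*(\mathcal{L}(\mathcal{A}))$.
   Context: Domains and terms. A concrete domain $\mathcal{D}$ with interpreted symbols $\mathcal{F}_\bullet=\mathcal{D}\cup OP$ (elements of $\mathcal{D}$ as constants, operations $OP$ on $\mathcal{D}$) and passive (uninterpreted) symbols $\mathcal{F}_\circ$; $eval$ simplifies terms over $\mathcal{F}_\bullet$ to elements of $\mathcal{D}$ and extends homomorphically to other terms. The concrete domain is abstracted (Galois connection, abstraction $\alpha$) by an atomic lattice $\Lambda$, whose atoms correspond to concrete values; abstract interpreted symbols are $\mathcal{F}_\bullet^{\#}=\Lambda\cup OP^{\#}\cup\{\sqcup,\sqcap\}$ with abstract evaluation into $\Lambda$. Lattice tree automaton (LTA) $\langle\mathcal{F},\mathcal{Q},\mathcal{Q}_f,\Delta\rangle$, $\mathcal{F}=\mathcal{F}_\circ\cup\mathcal{F}_\bullet^{\#}$: finite states, final states, normalized transitions $f(q_1,\dots,q_n)\to q$ including lambda transitions $\lambda\to q$ ($\lambda\in\Lambda$). Runs: a subterm over interpreted symbols whose evaluation is $\sqsubseteq\lambda$ reduces to $q$ if $\lambda\to q\in\Delta$; $f(q_1..q_n)\to q$ rewrites as usual. The term order $\sqsubseteq$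 compares interpreted subterms by evaluation and passive symbols structurally. $\mathcal{L}(\mathcal{A},q)$: ground terms $t$ (passive symbols, operations, atoms of $\Lambda$) such that some $t'\sqsupseteq t$ satisfies $t'\to^*_{\mathcal{A}}q$; $\mathcal{L}(\mathcal{A})$ the union over final states. Conditional TRS. Rules $l\to r\Leftarrow c_1\wedge\dots\wedge c_n$ with $l$ a non-variable term over passive symbols and variables, $r$ a term over $\mathcal{F}_\circ\cup\mathcal{F}_\bullet$ and variables, $\mathit{Var}(r)\subseteq\mathit{Var}(l)$, each $c_i=\rho_i(t_1,\dots,t_m)$ with $\rho_i$ a predicate on $\mathcal{D}^m$ and $t_j$ terms over interpreted symbols and variables of $l$; a predicate evaluates its arguments with $eval$ and is false if some argument is not a term over interpreted symbols. Left-linear: each variable occurs at most once in $l$. Rewriting: $s\to_{\mathcal{R}}t$ iff there are a rule, a position $p$ and a ground substitution $\sigma$ with $s|_p=l\sigma$, all $c_i\sigma$ true, and $t=eval(s[r\sigma]_p)$. $\mathcal{R}^*(L)$ is the set of terms reachable from $L$ by $\to^*_{\mathcal{R}}$. Completion. For a rule $rl=l\to r\Leftarrow c$ and state $q$: $Matching(l,\mathcal{A},q)$ returns the substitutions $\sigma$ from variables to states with $l\sigma\to^*_{\mathcal{A}}q$; a solver $Solve(\sigma,\mathcal{A},c)$ restricts the constrained variables to lattice elements, over-approximating the solutions of $c$; $\Omega(\mathcal{A},rl,q)=\{\sigma'\mid\sigma\in Matching(l,\mathcal{A},q),\ \sigma'\in Solve(\sigma,\mathcal{A},c),\ \nexists\sigma'':\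 r\sigma'\sqsubseteq r\sigma''\to^*_{\mathcal{A}}q\}$. $Norm(s\to^*q)$ turns $s\to q$ into normalized transitions (concrete constants $d$ become $\alpha(d)\to q$, subterms get existing states recognizing them or new states). The one-step completed automaton ${\cal C}_{\mathcal{R}}(\mathcal{A})$ adds, for every rule, state $q$ and $\sigma\in\Omega(\mathcal{A},rl,q)$, the transitions $Norm(r\sigma\to^* q')\cup\{q'\to q\}$ with $q'$ a new state. $\leadsto^!_E$ merges (replacing one state by the other everywhere) any states $q,q'$ such that for some equation $u=v\Leftarrow c$ of $E$ and substitution $\sigma$, $u\sigma\to^*q$, $v\sigma\to^*q'$ and $c$ is satisfiable. $eval(\mathcal{A})$ closes the transition set under the rule: if $f(q_1..q_k)\to q$ with $f$ an interpreted operation and $\lambda_i\to^* q_i$, add $eval(f(\lambda_1..\lambda_k))\to q$ unless some $\lambda\to q$ already covers it (a widening operator on $\Lambda$ may be used to make this terminate, which only enlarges lattice elements). The completion sequence is $\mathcal{A}^0_{\mathcal{R},E}=\mathcal{A}$, and $\mathcal{A}^{n+1}_{\mathcal{R},E}=eval(\mathcal{A}'')$ where ${\cal C}_{\mathcal{R}}(eval(\mathcal{A}^n_{\mathcal{R},E}))\leadsto^!_E\mathcal{A}''$; completion terminates if $\mathcal{A}^{k+1}_{\mathcal{R},E}=\mathcal{A}^k_{\mathcal{R},E}$ for some $k$, and then $\mathcal{A}^*_{\mathcal{R},E}=\mathcal{A}^k_{\mathcal{R},E}$. *)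

From HB Require Import structures.
From mathcomp Require Import all_boot all_order.
From Stdlib Require List.

Set Implicit Arguments.
Unset Strict Implicit.
Unset Printing Implicit Defensive.

Import Order.Theory.
Local Open Scope order_scope.

Definition is_atom (disp : Order.disp_t) (L : bLatticeType disp) (a : L) : Prop :=
  a != \bot /\ forall b : L, b <= a -> b = \bot \/ b = a.

Record domain : Type := Domain {
  passive : Type;
  arP : passive -> nat;
  dval : Type;
  oper : Type;
  arO : oper -> nat;
  opsem : oper -> seq dval -> dval (* semantics, used at the right arity *)
}.

Record absdom (Dm : domain) : Type := AbsDom {
  adisp : Order.disp_t;
  lat : bLatticeType adisp;
  alpha : (dval Dm -> Prop) -> lat;
  gamma : lat -> dval Dm -> Prop;
  opA : oper Dm -> seq lat -> lat;
  galois : forall (X : dval Dm -> Prop) (l : lat),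
      alpha X <= l <-> (forall d, X d -> gamma l d);
  atomic : forall l : lat, l != \bot -> exists a, is_atom a /\ a <= l;
  alpha_atom : forall d, is_atom (alpha (fun x => x = d));
  atom_alpha : forall a : lat, is_atom a -> exists d, a = alpha (fun x => x = d);
  alpha_inj : forall d d', alpha (fun x => x = d) = alpha (fun x => x = d') -> d = d';
  opA_sound : forall o (ds : seq (dval Dm)) (ls : seq lat),
      size ls = arO o -> List.Forall2 (fun d l => gamma l d) ds ls ->
      gamma (opA o ls) (opsem o ds)
}.

(* Generic terms: variables/states (nat), passive symbols, (interpreted)
   operation symbols, constants.                                       *)
Inductive term (F K O : Type) : Type :=
| TVar (x : nat)
| TPas (f : F) (ts : seq (term F K O))
| TOp (o : O) (ts : seq (term F K O))
| TCst (k : K).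
Arguments TVar {F K O}.
Arguments TPas {F K O}.
Arguments TOp {F K O}.
Arguments TCst {F K O}.

Fixpoint vars F K O (t : term F K O) : seq nat :=
  match t with
  | TVar x => [:: x]
  | TPas _ ts => flatten (map (@vars F K O) ts)
  | TOp _ ts => flatten (map (@vars F K O) ts)
  | TCst _ => [::]
  end.

Definition ground F K O (t : term F K O) : Prop := vars t = [::].

Fixpoint tsub F K O (g : nat -> term F K O) (t : term F K O) : term F K O :=
  match t with
  | TVar x => g x
  | TPas f ts => TPas f (map (tsub g) ts)
  | TOp o ts => TOp o (map (tsub g) ts)
  | TCst k => TCst k
  end.

Fixpoint tmap F K O K' O' (fk : K -> K') (fo : O -> O') (t : term F K O)
  : term F K' O' :=
  match t with
  | TVar x => TVar x
  | TPas f ts => TPas f (map (tmap fk fo) ts)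
  | TOp o ts => TOp (fo o) (map (tmap fk fo) ts)
  | TCst k => TCst (fk k)
  end.

Fixpoint wf F K O (arF : F -> nat) (arOp : O -> nat) (t : term F K O) : bool :=
  match t with
  | TVar _ => true
  | TPas f ts => (size ts == arF f) && all (wf arF arOp) ts
  | TOp o ts => (size ts == arOp o) && all (wf arF arOp) ts
  | TCst _ => true
  end.

Fixpoint passive_only F K O (t : term F K O) : bool :=
  match t with
  | TVar _ => true
  | TPas _ ts => all (@passive_only F K O) ts
  | _ => false
  end.

Fixpoint no_passive F K O (t : term F K O) : bool :=
  match t with
  | TPas _ _ => false
  | TOp _ ts => all (@no_passive F K O) ts
  | _ => true
  end.

Definition is_var F K O (t : term F K O) : bool :=
  if t is TVar _ then true else false.

Inductive at_pos F K O (P : term F K O -> term F K O -> Prop)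
  : term F K O -> term F K O -> Prop :=
| at_root s t : P s t -> at_pos P s t
| at_pas f l1 s t l2 : at_pos P s t ->
    at_pos P (TPas f (l1 ++ s :: l2)) (TPas f (l1 ++ t :: l2))
| at_op o l1 s t l2 : at_pos P s t ->
    at_pos P (TOp o (l1 ++ s :: l2)) (TOp o (l1 ++ t :: l2)).

Inductive star (T : Type) (R : T -> T -> Prop) : T -> T -> Prop :=
| star_refl x : star R x x
| star_step x y z : R x y -> star R y z -> star R x z.

Fixpoint all_some (T : Type) (s : seq (option T)) : option (seq T) :=
  match s with
  | [::] => Some [::]
  | Some x :: s' => if all_some s' is Some l then Some (x :: l) else None
  | None :: _ => None
  end.

Section Completion.

Variable Dm : domain.

Definition cterm := term (passive Dm) (dval Dm) (oper Dm).

Definition wfc (t : cterm) : bool := wf (@arP Dm) (@arO Dm) t.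

Definition get_cst (t : cterm) : option (dval Dm) :=
  if t is TCst d then Some d else None.

Fixpoint ceval (t : cterm) : cterm :=
  match t with
  | TVar x => TVar x
  | TPas f ts => TPas f (map ceval ts)
  | TOp o ts =>
      let ts' := map ceval ts in
      match all_some (map get_cst ts') with
      | Some ds => if size ds == arO o then TCst (opsem o ds) else TOp o ts'
      | None => TOp o ts'
      end
  | TCst d => TCst d
  end.

Record constr : Type := Constr {
  cpred : seq (dval Dm) -> Prop;
  cargs : seq cterm
}.

Record rule : Type := Rule { lhs : cterm; rhs : cterm; conds : seq constr }.

Record approx_eq : Type := ApproxEq { eq_l : cterm; eq_r : cterm; eq_c : seq constr }.

(* a predicate evaluates its arguments; false if one is not interpreted *)
Definition cond_holds (th : nat -> cterm) (c : constr) : Prop :=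
  exists ds, List.Forall2 (fun a d => ceval (tsub th a) = TCst d) (cargs c) ds
             /\ cpred c ds.

Definition cvars (cs : seq constr) : seq nat :=
  flatten (map (fun c => flatten (map (@vars _ _ _) (cargs c))) cs).

Definition rule_ok (rl : rule) : Prop :=
  ~~ is_var (lhs rl) /\ passive_only (lhs rl) /\
  wfc (lhs rl) /\ wfc (rhs rl) /\
  {subset vars (rhs rl) <= vars (lhs rl)} /\
  (forall c, List.In c (conds rl) -> forall a, List.In a (cargs c) ->
      no_passive a /\ wfc a /\ {subset vars a <= vars (lhs rl)}).

Definition left_linear_ctrs (R : seq rule) : Prop :=
  forall rl, List.In rl R -> rule_ok rl /\ uniq (vars (lhs rl)).

Definition linear_eqs (E : seq approx_eq) : Prop :=
  forall e, List.In e E ->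
    wfc (eq_l e) /\ wfc (eq_r e) /\ uniq (vars (eq_l e)) /\ uniq (vars (eq_r e)).

Definition rew_root (R : seq rule) (s t : cterm) : Prop :=
  exists rl th, List.In rl R /\ (forall x, ground (th x)) /\
    s = tsub th (lhs rl) /\ List.Forall (cond_holds th) (conds rl) /\
    t = tsub th (rhs rl).

Definition ctrs_step (R : seq rule) (s t : cterm) : Prop :=
  exists u, at_pos (rew_root R) s u /\ t = ceval u.

Definition reach (R : seq rule) (L : cterm -> Prop) (t : cterm) : Prop :=
  exists s, L s /\ star (ctrs_step R) s t.

Variable Ab : absdom Dm.
Local Notation Lam := (lat Ab).

Definition alpha1 (d : dval Dm) : Lam := alpha Ab (fun x => x = d).

Inductive aop : Type := AO (o : oper Dm) | AJoin | AMeet.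

Definition arA (o : aop) : nat :=
  match o with AO o' => arO o' | _ => 2 end.

Definition aterm := term (passive Dm) Lam aop.

Definition wfa (t : aterm) : bool := wf (@arP Dm) arA t.

Definition aeval_op (o : aop) (ls : seq Lam) : option Lam :=
  match o, ls with
  | AO o', _ => if size ls == arO o' then Some (opA o' ls) else None
  | AJoin, [:: a; b] => Some (a `|` b)
  | AMeet, [:: a; b] => Some (a `&` b)
  | _, _ => None
  end.

Fixpoint aeval (t : aterm) : option Lam :=
  match t with
  | TCst l => Some l
  | TOp o ts => obind (aeval_op o) (all_some (map aeval ts))
  | _ => None
  end.

Definition abs (t : cterm) : aterm := tmap alpha1 AO t.

Inductive cleq : cterm -> aterm -> Prop :=
| CleEval t t' d m : ceval t = TCst d -> aeval t' = Some m ->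
    alpha1 d <= m -> cleq t t'
| ClePas f ts ts' : List.Forall2 cleq ts ts' -> cleq (TPas f ts) (TPas f ts')
| CleOp o ts ts' : List.Forall2 cleq ts ts' -> cleq (TOp o ts) (TOp (AO o) ts').

Inductive aleq : aterm -> aterm -> Prop :=
| AleEval s t m n : aeval s = Some m -> aeval t = Some n -> m <= n -> aleq s t
| AleVar q : aleq (TVar q) (TVar q)
| AlePas f ss ts : List.Forall2 aleq ss ts -> aleq (TPas f ss) (TPas f ts)
| AleOp o ss ts : List.Forall2 aleq ss ts -> aleq (TOp o ss) (TOp o ts).

Inductive tr : Type :=
| TrF (f : passive Dm) (qs : seq nat) (q : nat)
| TrO (o : aop) (qs : seq nat) (q : nat)
| TrL (l : Lam) (q : nat)
| TrE (p q : nat).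

Record lta : Type := LTA { st : seq nat; fin : seq nat; delta : seq tr }.

Definition tr_ok (A : lta) (t : tr) : Prop :=
  match t with
  | TrF f qs q => size qs = arP f /\ all (mem (st A)) (q :: qs)
  | TrO o qs q => size qs = arA o /\ all (mem (st A)) (q :: qs)
  | TrL _ q => q \in st A
  | TrE p q => (p \in st A) && (q \in st A)
  end.

Definition is_lta (A : lta) : Prop :=
  {subset fin A <= st A} /\ forall t, List.In t (delta A) -> tr_ok A t.

Definition run_root (A : lta) (s t : aterm) : Prop :=
  (exists l q m, List.In (TrL l q) (delta A) /\ aeval s = Some m /\ m <= l /\
     t = TVar q)
  \/ (exists f qs q, List.In (TrF f qs q) (delta A) /\
        s = TPas f (map TVar qs) /\ t = TVar q)
  \/ (exists o qs q, List.In (TrO o qs q) (delta A) /\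
        s = TOp o (map TVar qs) /\ t = TVar q)
  \/ (exists p q, List.In (TrE p q) (delta A) /\ s = TVar p /\ t = TVar q).

Definition run (A : lta) : aterm -> aterm -> Prop := at_pos (run_root A).

Definition runs (A : lta) (s : aterm) (q : nat) : Prop := star (run A) s (TVar q).

Definition lang_q (A : lta) (q : nat) (t : cterm) : Prop :=
  ground t /\ wfc t /\
  exists t' : aterm, ground t' /\ wfa t' /\ cleq t t' /\ runs A t' q.

Definition lang (A : lta) (t : cterm) : Prop :=
  exists q, q \in fin A /\ lang_q A q t.

Definition matches (A : lta) (l : cterm) (q : nat) (s : nat -> nat) : Prop :=
  runs A (tsub (fun x => TVar (s x)) (abs l)) q.

Inductive sval : Type := SState (q : nat) | SLat (l : Lam).

Definition sval_term (v : sval) : aterm :=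
  match v with SState q => TVar q | SLat l => TCst l end.

Definition inst (r : cterm) (s : nat -> sval) : aterm :=
  tsub (fun x => sval_term (s x)) (abs r).

Definition solver := (nat -> nat) -> lta -> seq constr -> seq (nat -> sval).

(* Solve restricts the constrained variables to lattice elements (the
   others keep their state) and over-approximates the solutions of c *)
Definition solver_ok (R : seq rule) (Solve : solver) : Prop :=
  (forall s A cs s', List.In s' (Solve s A cs) -> forall x,
      (x \in cvars cs -> exists l, s' x = SLat l) /\
      (x \notin cvars cs -> s' x = SState (s x)))
  /\
  (forall rl, List.In rl R -> forall A q s (th : nat -> cterm),
      matches A (lhs rl) q s ->
      (forall x, x \in vars (lhs rl) -> lang_q A (s x) (th x)) ->
      List.Forall (cond_holds th) (conds rl) ->
      exists s', List.In s' (Solve s A (conds rl)) /\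
        forall x, x \in cvars (conds rl) ->
          exists l d, s' x = SLat l /\ ceval (th x) = TCst d /\ alpha1 d <= l).

Definition in_omega (Solve : solver) (A : lta) (rl : rule) (q : nat)
    (s' : nat -> sval) : Prop :=
  exists s, matches A (lhs rl) q s /\ List.In s' (Solve s A (conds rl)) /\
    ~ (exists s'', aleq (inst (rhs rl) s') (inst (rhs rl) s'') /\
                   runs A (inst (rhs rl) s'') q).

(* Norm(s ->* q'): normalized transitions; subterms get existing states
   recognizing them or fresh states (collected in the last argument).  *)
Inductive norm_sub (A : lta) : aterm -> nat -> seq tr -> seq nat -> Prop :=
| NS_state p : norm_sub A (TVar p) p [::] [::]
| NS_exist s p : ~~ is_var s -> p \in st A -> runs A s p -> norm_sub A s p [::] [::]
| NS_lat l p : norm_sub A (TCst l) p [:: TrL l p] [:: p]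
| NS_pas f ss ps N F p : norm_list A ss ps N F ->
    norm_sub A (TPas f ss) p (N ++ [:: TrF f ps p]) (p :: F)
| NS_op o ss ps N F p : norm_list A ss ps N F ->
    norm_sub A (TOp o ss) p (N ++ [:: TrO o ps p]) (p :: F)
with norm_list (A : lta) : seq aterm -> seq nat -> seq tr -> seq nat -> Prop :=
| NL_nil : norm_list A [::] [::] [::] [::]
| NL_cons s ss p ps N Ns F Fs : norm_sub A s p N F -> norm_list A ss ps Ns Fs ->
    norm_list A (s :: ss) (p :: ps) (N ++ Ns) (F ++ Fs).

Inductive norm_root (A : lta) : aterm -> nat -> seq tr -> seq nat -> Prop :=
| NR_state p q' : norm_root A (TVar p) q' [:: TrE p q'] [::]
| NR_lat l q' : norm_root A (TCst l) q' [:: TrL l q'] [::]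
| NR_pas f ss ps N F q' : norm_list A ss ps N F ->
    norm_root A (TPas f ss) q' (N ++ [:: TrF f ps q']) F
| NR_op o ss ps N F q' : norm_list A ss ps N F ->
    norm_root A (TOp o ss) q' (N ++ [:: TrO o ps q']) F.

Record cpair : Type := CP {
  cp_rule : nat;
  cp_q : nat;
  cp_sub : nat -> sval;
  cp_new : nat;
  cp_tr : seq tr;
  cp_fresh : seq nat
}.

Definition same_key (R : seq rule) (i q : nat) (s : nat -> sval)
    (i' q' : nat) (s' : nat -> sval) : Prop :=
  i = i' /\ q = q' /\
  forall rl, List.nth_error R i = Some rl ->
    forall x, x \in vars (lhs rl) -> s x = s' x.

Definition CR_step (R : seq rule) (Solve : solver) (A B : lta) : Prop :=
  exists cps : seq cpair,
    let fresh := flatten (map (fun c => cp_new c :: cp_fresh c) cps) in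
    (forall c, List.In c cps -> exists rl,
        List.nth_error R (cp_rule c) = Some rl /\ cp_q c \in st A /\
        in_omega Solve A rl (cp_q c) (cp_sub c) /\
        norm_root A (inst (rhs rl) (cp_sub c)) (cp_new c) (cp_tr c) (cp_fresh c))
    /\ (forall i rl q s', List.nth_error R i = Some rl -> q \in st A ->
          in_omega Solve A rl q s' ->
          exists c, List.In c cps /\ same_key R i q s' (cp_rule c) (cp_q c) (cp_sub c))
    /\ (forall i j c1 c2, i <> j -> List.nth_error cps i = Some c1 ->
          List.nth_error cps j = Some c2 ->
          ~ same_key R (cp_rule c1) (cp_q c1) (cp_sub c1)
                       (cp_rule c2) (cp_q c2) (cp_sub c2))
    /\ uniq fresh /\ all (fun p => p \notin st A) fresh
    /\ B = LTA (st A ++ fresh) (fin A)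
              (delta A ++ flatten (map (fun c => cp_tr c ++ [:: TrE (cp_new c) (cp_q c)]) cps)).

Definition rename (a b : nat) (x : nat) : nat := if x == a then b else x.

Definition rename_tr (g : nat -> nat) (t : tr) : tr :=
  match t with
  | TrF f qs q => TrF f (map g qs) (g q)
  | TrO o qs q => TrO o (map g qs) (g q)
  | TrL l q => TrL l (g q)
  | TrE p q => TrE (g p) (g q)
  end.

Definition rename_lta (g : nat -> nat) (A : lta) : lta :=
  LTA (map g (st A)) (map g (fin A)) (map (rename_tr g) (delta A)).

Definition satisfiable (cs : seq constr) : Prop :=
  exists th : nat -> cterm, (forall x, ground (th x)) /\ List.Forall (cond_holds th) cs.

Definition mergeable (E : seq approx_eq) (A : lta) (q q' : nat) : Prop :=
  q \in st A /\ q' \in st A /\ q != q' /\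
  exists e (s : nat -> nat), List.In e E /\
    runs A (tsub (fun x => TVar (s x)) (abs (eq_l e))) q /\
    runs A (tsub (fun x => TVar (s x)) (abs (eq_r e))) q' /\
    satisfiable (eq_c e).

Definition merge_step (E : seq approx_eq) (A B : lta) : Prop :=
  exists q q', mergeable E A q q' /\
    (B = rename_lta (rename q' q) A \/ B = rename_lta (rename q q') A).

Definition merge_nf (E : seq approx_eq) (A B : lta) : Prop :=
  star (merge_step E) A B /\ forall q q', ~ mergeable E B q q'.

(* eval(A): closure under lattice evaluation (possibly widened)         *)
Definition eval_add (A B : lta) : Prop :=
  exists o qs q (ls : seq Lam) v m,
    List.In (TrO o qs q) (delta A) /\
    List.Forall2 (fun l p => runs A (TCst l) p) ls qs /\
    aeval_op o ls = Some v /\ v <= m /\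
    ~ (exists l, List.In (TrL l q) (delta A) /\ v <= l) /\
    B = LTA (st A) (fin A) (delta A ++ [:: TrL m q]).

Definition eval_closed (A : lta) : Prop :=
  forall o qs q (ls : seq Lam) v,
    List.In (TrO o qs q) (delta A) ->
    List.Forall2 (fun l p => runs A (TCst l) p) ls qs ->
    aeval_op o ls = Some v ->
    exists l, List.In (TrL l q) (delta A) /\ v <= l.

Definition eval_clos (A B : lta) : Prop := star eval_add A B /\ eval_closed B.

Definition comp_step (R : seq rule) (E : seq approx_eq) (Solve : solver) (A B : lta) : Prop :=
  exists A1 A2 A3, eval_clos A A1 /\ CR_step R Solve A1 A2 /\
    merge_nf E A2 A3 /\ eval_clos A3 B.

Definition lta_eq (A B : lta) : Prop :=
  (forall q, (q \in st A) = (q \in st B)) /\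
  (forall q, (q \in fin A) = (q \in fin B)) /\
  (forall t, List.In t (delta A) <-> List.In t (delta B)).

Definition completion_terminates (R : seq rule) (E : seq approx_eq) (Solve : solver)
    (A Astar : lta) : Prop :=
  exists (k : nat) (As : nat -> lta),
    As 0 = A /\ (forall n, n < k -> comp_step R E Solve (As n) (As n.+1)) /\
    As k = Astar /\
    exists B, comp_step R E Solve Astar B /\ lta_eq B Astar.

End Completion.

(* The invariant carried through a rewrite step s ->R u is: if s is in L(A1, q),
   witnessed by a ground abstract term t' above s that runs to q, then u is in L(A2, q)
   for A2 = C_R(A1). At the redex, left-linearity lets the run of t' be read back as a
   state substitution matching the left-hand side into q; the solver turns it into s',
   for which the instantiated right-hand side r s' lies above the contractum. Either r
   s' is already subsumed by a term reaching q in A1, or s' is in Omega and completion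
   added Norm(r s' ->* q') together with q' -> q. Inside a context the run splits at
   the hole, and evaluating the contractum keeps it below the same abstract term.
   Evaluation closure and merging of states only add or rename transitions, so no
   accepted term is lost; at the fixpoint A*, where one more completion step gives back
   A*, the language of A* is therefore closed under rewriting and contains L(A). *)

From Pilot Require Import Defs.
From mathcomp Require Import all_boot all_order.
From Stdlib Require List.
From Stdlib Require Import Classical.

Set Implicit Arguments.
Unset Strict Implicit.
Unset Printing Implicit Defensive.

Import Order.Theory.

Section ListFacts.
Variables A B C : Type.

Lemma map_ext_In (f g : A -> B) (l : seq A) :
  (forall x, List.In x l -> f x = g x) -> map f l = map g l.
Proof.
elim: l => [|a l IH] //= h; rewrite h; last by left.
by rewrite IH // => x hx; apply: h; right.
Qed.

Lemma In_map_iff (f : A -> B) (l : seq A) y :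
  List.In y (map f l) <-> exists x, f x = y /\ List.In x l.
Proof.
elim: l => [|a l IH] /=; first by split => // [[? []]].
split.
- by case=> [<-|/IH [x [h1 h2]]]; [exists a|exists x]; auto.
- by move=> [x [e [->|h]]]; [left|right; apply/IH; exists x].
Qed.

Lemma In_cat_iff (x : A) l1 l2 : List.In x (l1 ++ l2) <-> List.In x l1 \/ List.In x l2.
Proof. by elim: l1 => [|a l1 IH] /=; [split; [right|case]|rewrite IH; tauto]. Qed.

Lemma In_cat_mid (x : A) l1 l2 : List.In x (l1 ++ x :: l2).
Proof. by apply/In_cat_iff; right; left. Qed.

Lemma In_flatten (x : A) ss : List.In x (flatten ss) <-> exists s, List.In s ss /\ List.In x s.
Proof.
elim: ss => [|s ss IH] /=; first by split => // [[? []]].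
rewrite In_cat_iff IH; split.
- by case=> [h|[s' [h1 h2]]]; [exists s|exists s']; auto.
- by move=> [s' [[<-|h1] h2]]; [left|right; exists s'].
Qed.

Lemma all_In (p : pred A) (l : seq A) : (forall x, List.In x l -> p x) -> all p l.
Proof. by elim: l => //= a l IH h; rewrite h ?IH //; [move=> x hx; apply: h; right|left]. Qed.

Lemma In_all (p : pred A) (l : seq A) x : all p l -> List.In x l -> p x.
Proof. by elim: l => //= a l IH /andP [h1 h2] [<-|/IH]; auto. Qed.

Lemma all_some_map (l : seq A) : all_some (map Some l) = Some l.
Proof. by elim: l => //= a l ->. Qed.

Lemma all_some_inv (l : seq (option A)) ls : all_some l = Some ls -> l = map Some ls.
Proof.
elim: l ls => [|[a|] l IH] [|b ls] //=; case E: (all_some l) => [l'|] //.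
by case=> <- <-; rewrite (IH _ E).
Qed.

Lemma all_some_cat_None (l1 l2 : seq (option A)) : all_some (l1 ++ None :: l2) = None.
Proof. by elim: l1 => [|[a|] l1 IH] //=; rewrite IH. Qed.

Lemma map_Some_Forall2 (f : A -> option B) l ms :
  map f l = map Some ms <-> List.Forall2 (fun a m => f a = Some m) l ms.
Proof.
elim: l ms => [|a l IH] [|m ms] //=; split => //; try by inversion 1.
- by case=> h1 /IH h2; constructor.
- by inversion 1; subst; congr cons; [|apply/IH].
Qed.

Variable P : A -> B -> Prop.

Lemma Forall2_size l l' : List.Forall2 P l l' -> size l = size l'.
Proof. by elim=> //= ? ? ? ? _ _ ->. Qed.

Lemma Forall2_cat l1 l1' l2 l2' : List.Forall2 P l1 l1' -> List.Forall2 P l2 l2' ->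
  List.Forall2 P (l1 ++ l2) (l1' ++ l2').
Proof. by move=> h1 h2; elim: h1 => //= *; constructor. Qed.

Lemma Forall2_cat_inv l1 l2 l' : List.Forall2 P (l1 ++ l2) l' ->
  exists l1' l2', l' = l1' ++ l2' /\ List.Forall2 P l1 l1' /\ List.Forall2 P l2 l2'.
Proof.
elim: l1 l' => [|a l1 IH] l' /= h; first by exists [::], l'; do !split.
inversion h as [|? b ? l'' hab hrest]; subst.
have [m1 [m2 [-> [h1 h2]]]] := IH _ hrest.
by exists (b :: m1), m2; do !split => //; constructor.
Qed.

Lemma Forall2_cat_mid_inv l1 (u : A) l2 l' : List.Forall2 P (l1 ++ u :: l2) l' ->
  exists l1' v l2', l' = l1' ++ v :: l2' /\ List.Forall2 P l1 l1' /\ P u v /\ List.Forall2 P l2 l2'.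
Proof.
move=> /Forall2_cat_inv [m1 [m2 [-> [h1 h2]]]].
by inversion h2 as [|? v ? m3 hv hm3]; exists m1, v, m3.
Qed.

Lemma Forall2_mid l1 (u v : A) l2 qs :
  List.Forall2 P (l1 ++ v :: l2) qs -> (forall p, P v p -> P u p) ->
  List.Forall2 P (l1 ++ u :: l2) qs.
Proof.
move=> /Forall2_cat_mid_inv [m1 [w [m2 [-> [h1 [hw h2]]]]]] h.
by apply: Forall2_cat => //; constructor; auto.
Qed.

Lemma Forall2_impl_In (Q : A -> B -> Prop) l l' :
  List.Forall2 P l l' -> (forall a b, List.In a l -> P a b -> Q a b) -> List.Forall2 Q l l'.
Proof.
elim=> [|a b l1 l1' hab _ IH] h; constructor; first by apply: h => //; left.
by apply: IH => a' b' ha; apply: h; right.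
Qed.

Lemma Forall2_map_inv (g : C -> A) l l' :
  List.Forall2 P (map g l) l' -> List.Forall2 (fun c b => P (g c) b) l l'.
Proof. by elim: l l' => [|a l IH] [|t ts] /= h; inversion h; subst; constructor; auto. Qed.

Lemma Forall2_witness (Q : B -> C -> Prop) (S : A -> B -> Prop) l l' l'' :
  List.Forall2 P l l' -> List.Forall2 Q l' l'' ->
  (forall a b c, P a b -> Q b c -> S a b) -> List.Forall2 S l l'.
Proof.
move=> h; elim: h l'' => [|a b l1 l1' hab _ IH] [|c l2] h2 hS; inversion h2; subst.
all: by constructor; eauto.
Qed.

End ListFacts.

Lemma Forall2_map_l A B C (P : C -> B -> Prop) (f : A -> C) l l' :
  List.Forall2 (fun a b => P (f a) b) l l' -> List.Forall2 P (map f l) l'.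
Proof. by elim=> //= *; constructor. Qed.

Lemma Forall2_map_r A B D (P : A -> D -> Prop) (g : B -> D) l l' :
  List.Forall2 (fun a b => P a (g b)) l l' -> List.Forall2 P l (map g l').
Proof. by elim=> //= *; constructor. Qed.

Lemma Forall2_map_diag A B C (P : B -> C -> Prop) (f : A -> B) (g : A -> C) l :
  (forall r, List.In r l -> P (f r) (g r)) -> List.Forall2 P (map f l) (map g l).
Proof.
elim: l => [|a l IH] h /=; constructor; first by apply: h; left.
by apply: IH => r hr; apply: h; right.
Qed.

Lemma In_mem (T : eqType) (x : T) s : List.In x s -> x \in s.
Proof. by elim: s => //= a s IH [->|/IH]; rewrite inE ?eqxx // => ->; rewrite orbT. Qed.

Lemma mem_In (T : eqType) (x : T) s : x \in s -> List.In x s.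
Proof. by elim: s => //= a s IH; rewrite inE => /orP [/eqP ->|/IH]; auto. Qed.

Section Star.
Variable T : Type.

Lemma star_trans (R : T -> T -> Prop) x y z : star R x y -> star R y z -> star R x z.
Proof. by elim=> // a b c h _ IH /IH; apply: star_step. Qed.

Lemma star_map U (R : T -> T -> Prop) (R' : U -> U -> Prop) (g : T -> U) x y :
  (forall a b, R a b -> R' (g a) (g b)) -> star R x y -> star R' (g x) (g y).
Proof. by move=> h; elim=> [a|a b c hab _ IH]; [constructor|apply: star_step (h _ _ hab) IH]. Qed.

Lemma star_invariant (R : T -> T -> Prop) (I : T -> Prop) x y :
  (forall a b, R a b -> I a -> I b) -> star R x y -> I x -> I y.
Proof. by move=> h; elim=> // a b c hab _ IH /(h _ _ hab). Qed.

End Star.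

Section Terms.
Variables F K O : Type.
Local Notation T := (term F K O).

Fixpoint term_nested_ind (P : T -> Prop) (Hv : forall x, P (TVar x))
  (Hp : forall f ts, List.Forall P ts -> P (TPas f ts))
  (Ho : forall o ts, List.Forall P ts -> P (TOp o ts))
  (Hc : forall k, P (TCst k)) (t : T) {struct t} : P t :=
  let fix args (l : seq T) : List.Forall P l :=
    match l with
    | [::] => List.Forall_nil _
    | u :: l' => List.Forall_cons _ (term_nested_ind Hv Hp Ho Hc u) (args l')
    end in
  match t with
  | TVar x => Hv x
  | TPas f ts => Hp f ts (args ts)
  | TOp o ts => Ho o ts (args ts)
  | TCst k => Hc k
  end.

Definition node (k : F + O) (ts : seq T) : T :=
  match k with inl f => TPas f ts | inr o => TOp o ts end.

Lemma term_node_ind (P : T -> Prop) : (forall x, P (TVar x)) ->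
  (forall k ts, List.Forall P ts -> P (node k ts)) -> (forall c, P (TCst c)) ->
  forall t, P t.
Proof.
move=> Hv Hn Hc; elim/term_nested_ind => // [f|o] ts.
- exact: (Hn (inl f)).
- exact: (Hn (inr o)).
Qed.

Lemma vars_node k ts : vars (node k ts) = flatten (map (@vars F K O) ts).
Proof. by case: k. Qed.

Lemma tsub_node (g : nat -> T) k ts : tsub g (node k ts) = node k (map (tsub g) ts).
Proof. by case: k. Qed.

Lemma mem_flatten_vars (ts : seq T) x :
  x \in flatten (map (@vars F K O) ts) <-> exists t, List.In t ts /\ x \in vars t.
Proof.
elim: ts => [|t ts IH] /=; first by split => // [[? []]].
rewrite mem_cat; split.
- by case/orP => [h|/IH [u [hu hx]]]; [exists t|exists u]; auto.
- by move=> [u [[<-|hu] hx]]; [rewrite hx|apply/orP; right; apply/IH; exists u].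
Qed.

Lemma mem_vars_cat (l1 : seq T) u l2 p :
  p \in flatten (map (@vars F K O) (l1 ++ u :: l2)) =
  (p \in flatten (map (@vars F K O) (l1 ++ l2))) || (p \in vars u).
Proof. by rewrite !map_cat !flatten_cat /= !mem_cat orbCA orbC. Qed.

Lemma vars_tsub (g : nat -> T) t x :
  x \in vars (tsub g t) <-> exists y, y \in vars t /\ x \in vars (g y).
Proof.
elim/term_node_ind: t => [y|k ts /List.Forall_forall IH|c] /=.
- split; first by move=> h; exists y; rewrite inE eqxx.
  by move=> [z [hz h]]; move: hz; rewrite inE => /eqP <-.
- rewrite tsub_node !vars_node; split.
  + move/mem_flatten_vars=> [u [/In_map_iff [v [<- hv]] hx]].
    have [z [hz hg]] := proj1 (IH v hv) hx.
    by exists z; split => //; apply/mem_flatten_vars; exists v.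
  + move=> [z [/mem_flatten_vars [v [hv hz]] hg]].
    apply/mem_flatten_vars; exists (tsub g v); split; first by apply/In_map_iff; exists v.
    by apply/(IH v hv); exists z.
- by split => // [[? []]].
Qed.

Lemma ground_iff (t : T) : ground t <-> forall x, x \notin vars t.
Proof.
rewrite /ground; case: (vars t) => [|y s]; first by split.
by split => // /(_ y); rewrite inE eqxx.
Qed.

Lemma ground_node k (ts : seq T) :
  ground (node k ts) <-> forall b, List.In b ts -> ground b.
Proof.
rewrite ground_iff vars_node; split.
- move=> h b hb; apply/ground_iff => x; apply/negP => hx.
  by move: (h x); rewrite (proj2 (mem_flatten_vars _ _)) //; exists b.
- move=> h x; apply/negP => /mem_flatten_vars [b [hb hx]].
  by move: (proj1 (ground_iff b) (h b hb) x); rewrite hx.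
Qed.

Lemma ground_hole k (l1 : seq T) a l2 : ground (node k (l1 ++ a :: l2)) -> ground a.
Proof. by move=> /ground_node; apply; apply: In_cat_mid. Qed.

Lemma ground_fill k (l1 : seq T) a b l2 : ground (node k (l1 ++ a :: l2)) ->
  ground b -> ground (node k (l1 ++ b :: l2)).
Proof.
move=> /ground_node h hb; apply/ground_node => c /In_cat_iff [hc|[<-|hc]] //.
- by apply: h; apply/In_cat_iff; left.
- by apply: h; apply/In_cat_iff; right; right.
Qed.

Lemma ground_tsub (g : nat -> T) t :
  (forall x, x \in vars t -> ground (g x)) -> ground (tsub g t).
Proof.
move=> h; apply/ground_iff => x; apply/negP => /vars_tsub [y [hy hx]].
by have := proj1 (ground_iff _) (h y hy) x; rewrite hx.
Qed.

Lemma tsub_ext (g h : nat -> T) t :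
  (forall x, x \in vars t -> g x = h x) -> tsub g t = tsub h t.
Proof.
elim/term_node_ind: t => [y|k ts /List.Forall_forall IH|c] //= e.
- by apply: e; rewrite inE.
- rewrite !tsub_node; congr node; apply: map_ext_In => u hu; apply: IH => // x hx.
  by apply: e; rewrite vars_node; apply/mem_flatten_vars; exists u.
Qed.

Lemma tsub_id_ground (g : nat -> T) t : ground t -> tsub g t = t.
Proof.
elim/term_node_ind: t => [x|k ts /List.Forall_forall IH|c] //=.
move=> /ground_node h; rewrite tsub_node; congr node; rewrite -[RHS]map_id.
by apply: map_ext_In => u hu; apply: IH (h u hu).
Qed.

Variables (arF : F -> nat) (arOp : O -> nat).
Local Notation wfT := (wf arF arOp).

Definition arity (k : F + O) : nat := match k with inl f => arF f | inr o => arOp o end.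

Lemma wf_node k (ts : seq T) : wfT (node k ts) = (size ts == arity k) && all wfT ts.
Proof. by case: k. Qed.

Lemma wf_hole k (l1 : seq T) a l2 : wfT (node k (l1 ++ a :: l2)) -> wfT a.
Proof. by rewrite wf_node all_cat /= => /and3P [_ _ /andP []]. Qed.

Lemma wf_fill k (l1 : seq T) a b l2 : wfT (node k (l1 ++ a :: l2)) ->
  wfT b -> wfT (node k (l1 ++ b :: l2)).
Proof.
rewrite !wf_node !size_cat !all_cat /= => /andP [hs /and3P [h1 _ h3]] hb.
by rewrite hs h1 hb h3.
Qed.

Lemma wf_tsub (g : nat -> T) t :
  wfT t -> (forall x, x \in vars t -> wfT (g x)) -> wfT (tsub g t).
Proof.
elim/term_node_ind: t => [x|k ts /List.Forall_forall IH|c] //= hw H.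
- by apply: H; rewrite inE.
- move: hw; rewrite tsub_node !wf_node size_map => /andP [-> ha] /=.
  apply: all_In => u /In_map_iff [r [<- hr]]; apply: (IH _ hr (In_all ha hr)) => x hx.
  by apply: H; rewrite vars_node; apply/mem_flatten_vars; exists r.
Qed.

Lemma wf_tsub_inv (g : nat -> T) t x : x \in vars t -> wfT (tsub g t) -> wfT (g x).
Proof.
elim/term_node_ind: t => [y|k ts /List.Forall_forall IH|c] //=.
- by rewrite inE => /eqP ->.
- rewrite vars_node tsub_node wf_node => /mem_flatten_vars [r [hr hx]] /andP [_ ha].
  by apply: (IH _ hr hx); apply: (In_all ha); apply/In_map_iff; exists r.
Qed.

End Terms.

Lemma vars_tmap F K O K' O' (fk : K -> K') (fo : O -> O') (t : term F K O) :
  vars (tmap fk fo t) = vars t.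
Proof.
elim/term_nested_ind: t => //= [f ts IH|o ts IH]; rewrite -map_comp; congr flatten;
  apply: map_ext_In => u hu; exact: (proj1 (List.Forall_forall _ _) IH u hu).
Qed.

Section Evaluation.
Variables (Dm : domain) (Ab : absdom Dm).
Local Notation ct := (cterm Dm).
Local Notation atm := (aterm Ab).
Local Open Scope order_scope.

Fixpoint cleq_nested_ind (P : ct -> atm -> Prop)
  (H1 : forall t t' d m, ceval t = TCst d -> aeval t' = Some m -> alpha1 Ab d <= m -> P t t')
  (H2 : forall f ts ts', List.Forall2 P ts ts' -> P (TPas f ts) (TPas f ts'))
  (H3 : forall o ts ts', List.Forall2 (@cleq Dm Ab) ts ts' -> List.Forall2 P ts ts' ->
          P (TOp o ts) (TOp (AO o) ts'))
  t t' (h : cleq t t') {struct h} : P t t' :=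
  let fix args l l' (hl : List.Forall2 (@cleq Dm Ab) l l') : List.Forall2 P l l' :=
    match hl with
    | List.Forall2_nil => List.Forall2_nil _
    | List.Forall2_cons _ _ _ _ hxy hl' =>
        List.Forall2_cons _ _ (cleq_nested_ind H1 H2 H3 hxy) (args _ _ hl')
    end in
  match h with
  | CleEval t t' d m e1 e2 e3 => H1 t t' d m e1 e2 e3
  | ClePas f ts ts' hf => H2 f ts ts' (args ts ts' hf)
  | CleOp o ts ts' hf => H3 o ts ts' hf (args ts ts' hf)
  end.

Lemma alpha1_gamma d (l : lat Ab) : alpha1 Ab d <= l <-> gamma l d.
Proof. by rewrite /alpha1 galois; split => [|h x ->]; [apply|]. Qed.

Definition evals_below (c : ct) (a : atm) : Prop :=
  exists d m, ceval c = TCst d /\ aeval a = Some m /\ alpha1 Ab d <= m.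

Lemma cleq_cst_evals_below d a : cleq (TCst d) a -> evals_below (TCst d) a.
Proof. by inversion 1 as [? ? d' m e1 e2 hm| |]; exists d', m. Qed.

Lemma ceval_op_cst o (ts : seq ct) ds :
  map (@ceval Dm) ts = map TCst ds -> size ds = arO o ->
  ceval (TOp o ts) = TCst (opsem o ds).
Proof.
move=> e hs /=; rewrite e -map_comp.
have -> : [seq get_cst (TCst x) | x <- ds] = map Some ds by elim: ds {e hs} => //= ? ? ->.
by rewrite all_some_map hs eqxx.
Qed.

Lemma aeval_AO o (ts : seq atm) m :
  aeval (TOp (AO o) ts) = Some m <->
  exists ms, List.Forall2 (fun a m => aeval a = Some m) ts ms /\ size ms = arO o /\ m = opA o ms.
Proof.
split.
- rewrite /=; case E: (all_some _) => [ms|] //=; case: eqP => // hs [<-].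
  by exists ms; split => //; apply/map_Some_Forall2/all_some_inv.
- move=> [ms [/map_Some_Forall2 h [hs ->]]].
  by rewrite /= h all_some_map /= hs eqxx.
Qed.

Lemma evals_below_op o (ts : seq ct) (ts' : seq atm) :
  List.Forall2 evals_below ts ts' -> size ts = arO o ->
  evals_below (TOp o ts) (TOp (AO o) ts').
Proof.
move=> h hs.
have [ds [ms [e1 [e2 e3]]]] : exists ds ms, map (@ceval Dm) ts = map TCst ds /\
    List.Forall2 (fun a m => aeval a = Some m) ts' ms /\
    List.Forall2 (fun d m => gamma m d) ds ms.
  elim: h {hs} => [|c a l l' [d [m [h1 [h2 h3]]]] _ [ds [ms [e1 [e2 e3]]]]].
    by exists [::], [::]; repeat constructor.
  exists (d :: ds), (m :: ms); split; first by rewrite /= h1 e1.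
  by split; constructor => //; apply/alpha1_gamma.
have sd : size ds = size ts by have := congr1 size e1; rewrite !size_map.
have sm : size ms = arO o by rewrite -(Forall2_size e3) sd hs.
exists (opsem o ds), (opA o ms); split; first by apply: ceval_op_cst; rewrite ?sd.
split; first by apply/aeval_AO; exists ms.
by apply/alpha1_gamma; apply: opA_sound.
Qed.

Lemma cleq_aeval (c : ct) (a : atm) m : cleq c a -> aeval a = Some m ->
  exists d, ceval c = TCst d /\ alpha1 Ab d <= m.
Proof.
move=> h; elim/cleq_nested_ind: h m => [t t' d m0 e1 e2 e3|f ts ts' _|o ts ts' _ IH] m //.
- by rewrite e2 => -[<-]; exists d.
- move=> /aeval_AO [ms [h1 [h2 ->]]].
  have hs : size ts = arO o by rewrite (Forall2_size IH) (Forall2_size h1).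
  have hb : List.Forall2 evals_below ts ts'.
    apply: Forall2_witness IH h1 _ => c' a' m' hP hm'.
    by have [d [? ?]] := hP _ hm'; exists d, m'.
  have [d [m' [? [e ?]]]] := evals_below_op hb hs.
  have ea : aeval (TOp (AO o) ts') = Some (opA o ms) by apply/aeval_AO; exists ms.
  by exists d; split => //; move: e; rewrite ea => -[->].
Qed.

Lemma map_get_cst (l : seq ct) ds : map (@get_cst Dm) l = map Some ds -> l = map TCst ds.
Proof. by elim: l ds => [|a l IH] [|d ds] //=; case: a => // d' [-> /IH ->]. Qed.

Lemma cleq_ceval (c : ct) (a : atm) : cleq c a -> cleq (ceval c) a.
Proof.
elim/cleq_nested_ind => [t t' d m e1 e2 e3|f ts ts' IH|o ts ts' _ IH].
- by apply: (CleEval (d:=d) (m:=m)) => //; rewrite e1.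
- by rewrite /=; constructor; apply: Forall2_map_l.
- have hargs : List.Forall2 (@cleq Dm Ab) (map (@ceval Dm) ts) ts' by apply: Forall2_map_l.
  rewrite /=; case E: all_some => [ds|]; last exact: CleOp.
  case: eqP => hs; last exact: CleOp.
  have hd := map_get_cst (all_some_inv E).
  have hts : size ts = arO o by rewrite -hs -(size_map (@ceval Dm)) hd size_map.
  have hb : List.Forall2 evals_below ts ts'.
    elim: IH ds hd {E hs hts hargs} => [|t b l l' hta _ IHl] [|d ds] //= [e1 e2].
    constructor; last exact: IHl e2.
    by move: hta; rewrite e1 => /cleq_cst_evals_below [d0 [m [[<-] hm]]]; exists d, m.
  have [d [m [e1 [e2 e3]]]] := evals_below_op hb hts.
  move: e1; rewrite (ceval_op_cst hd hs) => -[ed].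
  by apply: (CleEval (d := d) (m := m)) => //; rewrite ed.
Qed.

Lemma aeval_ground_wf (a : atm) m : aeval a = Some m -> ground a /\ wfa a.
Proof.
elim/term_nested_ind: a m => [x|f ts IH|o ts IH|k] m //=.
case E: (all_some _) => [ms|] //= ho.
have hF := proj1 (map_Some_Forall2 _ _ _) (all_some_inv E).
have hgw : forall b, List.In b ts -> ground b /\ wfa b.
  move=> b hb; have [mb hmb] : exists mb, aeval b = Some mb.
    by elim: hF hb {IH E ho} => // a mm l l' ha _ IH2 [<-|/IH2 //]; exists mm.
  exact: (proj1 (List.Forall_forall _ _) IH b hb mb hmb).
split; first by apply/(ground_node (inr o)) => b /hgw [].
apply/andP; split; last by apply: all_In => b /hgw [].
rewrite (Forall2_size hF); case: o ho => [o| |] /=; first by case: eqP => // ->.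
all: by case: ms {hF E} => [|a [|b [|]]].
Qed.

Lemma ceval_vars (t : ct) x : x \in vars (ceval t) -> x \in vars t.
Proof.
have args ts : List.Forall (fun t => x \in vars (ceval t) -> x \in vars t) ts ->
    x \in flatten (map (@vars _ _ _) (map (@ceval Dm) ts)) ->
    x \in flatten (map (@vars _ _ _) ts).
  move=> /List.Forall_forall IH /mem_flatten_vars [u [/In_map_iff [v [<- hv]] hx]].
  by apply/mem_flatten_vars; exists v; split => //; apply: IH.
elim/term_nested_ind: t => [y|f ts IH|o ts IH|d] //=; first exact: args.
case: all_some => [ds|]; last exact: args.
by case: ifP => _; last exact: args.
Qed.

Lemma ceval_ground (t : ct) : ground t -> ground (ceval t).
Proof.
move=> /ground_iff h; apply/ground_iff => x; apply/negP => /ceval_vars hx.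
by move: (h x); rewrite hx.
Qed.

Lemma ceval_wfc (t : ct) : wfc t -> wfc (ceval t).
Proof.
have args k ts : List.Forall (fun t => wfc t -> wfc (ceval t)) ts ->
    wfc (node k ts) -> wfc (node k (map (@ceval Dm) ts)).
  rewrite /wfc !wf_node size_map => /List.Forall_forall IH /andP [-> ha] /=.
  by apply: all_In => c /In_map_iff [v [<- hv]]; exact: IH v hv (In_all ha hv).
elim/term_nested_ind: t => [y|f ts IH|o ts IH|d] //=; first exact: (args (inl f)).
move=> /(args (inr o) _ IH) hw.
by case: all_some => [ds|]; [case: ifP|].
Qed.

End Evaluation.

Section Runs.
Variables (Dm : domain) (Ab : absdom Dm).
Local Notation atm := (aterm Ab).
Local Open Scope order_scope.

Definition node_tr (k : passive Dm + aop Dm) (qs : seq nat) (q : nat) : tr Ab :=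
  match k with inl f => TrF Ab f qs q | inr o => TrO Ab o qs q end.

Lemma node_inj k k' (ts ts' : seq atm) : node k ts = node k' ts' -> k = k' /\ ts = ts'.
Proof. by case: k k' => ? [] ? //= [-> ->]. Qed.

Variant root_step (X : lta Ab) : atm -> atm -> Prop :=
| RootLat l q m s of List.In (TrL l q) (delta X) & aeval s = Some m & m <= l :
    root_step X s (TVar q)
| RootNode k qs q of List.In (node_tr k qs q) (delta X) :
    root_step X (node k (map TVar qs)) (TVar q)
| RootEps p q of List.In (TrE Ab p q) (delta X) : root_step X (TVar p) (TVar q).

Lemma run_rootP (X : lta Ab) s t : run_root X s t <-> root_step X s t.
Proof.
split.
- case=> [[l [q [m [h [ha [hm ->]]]]]]|[[f [qs [q [h [-> ->]]]]]|[[o [qs [q [h [-> ->]]]]]|[p [q [h [-> ->]]]]]]].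
  + exact: RootLat h ha hm.
  + exact: (RootNode (k := inl f)) h.
  + exact: (RootNode (k := inr o)) h.
  + exact: RootEps h.
- case=> [l q m s' h ha hm|[f|o] qs q h|p q h].
  + by left; exists l, q, m.
  + by right; left; exists f, qs, q.
  + by right; right; left; exists o, qs, q.
  + by right; right; right; exists p, q.
Qed.

Definition trans_in (N : seq (tr Ab)) (Y : lta Ab) : Prop :=
  forall T, List.In T N -> List.In T (delta Y).

Lemma trans_in_cat N1 N2 Y : trans_in (N1 ++ N2) Y -> trans_in N1 Y /\ trans_in N2 Y.
Proof. by move=> h; split => T hT; apply: h; apply/In_cat_iff; auto. Qed.

Lemma runs_root (X : lta Ab) s q : root_step X s (TVar q) -> runs X s q.
Proof. by move=> h; apply: star_step (star_refl _ _); apply/at_root/run_rootP. Qed.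

Lemma runs_lat (X : lta Ab) l q : List.In (TrL l q) (delta X) -> runs X (TCst l) q.
Proof. by move=> h; apply: runs_root; apply: (RootLat (m := l)) h _ _. Qed.

Lemma runs_eps (X : lta Ab) p q : List.In (TrE Ab p q) (delta X) -> runs X (TVar p) q.
Proof. by move=> h; apply: runs_root; apply: RootEps. Qed.

Lemma runs_node_tr (X : lta Ab) k qs q :
  List.In (node_tr k qs q) (delta X) -> runs X (node k (map TVar qs)) q.
Proof. by move=> h; apply: runs_root; apply: RootNode. Qed.

Lemma runs_mono (X Y : lta Ab) s t :
  trans_in (delta X) Y -> star (run X) s t -> star (run Y) s t.
Proof.
move=> h; apply: (star_map (g := id)) => a b.
elim=> [u v /run_rootP hr|f l1 u v l2 _ IH|o l1 u v l2 _ IH]; last 2 first; try by constructor.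
apply/at_root/run_rootP; case: hr => [l q m s' h1 ha hm|k qs q h1|p q h1].
- exact: RootLat (h _ h1) ha hm.
- exact: RootNode (h _ h1).
- exact: RootEps (h _ h1).
Qed.

Lemma star_run_hole (X : lta Ab) k l1 s t l2 : star (run X) s t ->
  star (run X) (node k (l1 ++ s :: l2)) (node k (l1 ++ t :: l2)).
Proof.
apply: (star_map (g := fun x => node k (l1 ++ x :: l2))) => a b h.
by case: k => ? /=; constructor.
Qed.

Lemma star_run_node (X : lta Ab) k bs as' :
  List.Forall2 (star (run X)) bs as' -> star (run X) (node k bs) (node k as').
Proof.
move=> h.
suff H : forall l1, star (run X) (node k (l1 ++ bs)) (node k (l1 ++ as')) by exact: (H [::]).
elim: h => [|b a bs1 as1 hba _ IH] l1; first by constructor.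
apply: star_trans (star_run_hole k l1 bs1 hba) _.
by have := IH (rcons l1 a); rewrite -!cats1 -!catA.
Qed.

Lemma runs_node (X : lta Ab) k ts qs q :
  List.Forall2 (runs X) ts qs -> runs X (node k (map TVar qs)) q -> runs X (node k ts) q.
Proof. by move=> h; apply: star_trans; apply: star_run_node; apply: Forall2_map_r. Qed.

Lemma run_aeval_None (X : lta Ab) s t : run X s t -> aeval t = None.
Proof.
elim=> [u v /run_rootP []|//|o l1 u v l2 _ IH] //=.
by rewrite map_cat /= IH all_some_cat_None.
Qed.

Lemma run_vars (X : lta Ab) s t : run X s t -> exists x, x \in vars t.
Proof.
elim=> [u v /run_rootP []|f l1 u v l2 _ [x IH]|o l1 u v l2 _ [x IH]] /=.
1-3: by move=> *; eexists; apply: mem_head.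
all: by exists x; apply/mem_flatten_vars; exists v; split => //; apply: In_cat_mid.
Qed.

Lemma star_run_ground (X : lta Ab) b a : star (run X) b a -> ground a -> b = a.
Proof.
elim=> // x y z h _ IH hz; have e := IH hz; subst z.
have [v hv] := run_vars h.
by have := proj1 (ground_iff y) hz v; rewrite hv.
Qed.

Lemma runs_states_refl (X : lta Ab) qs : List.Forall2 (runs X) (map TVar qs) qs.
Proof. by elim: qs => [|q qs IH] /=; constructor => //; constructor. Qed.

Lemma runs_node_inv (X : lta Ab) k ts q :
  runs X (node k ts) q -> aeval (node k ts) = None ->
  exists qs, List.Forall2 (runs X) ts qs /\ runs X (node k (map TVar qs)) q.
Proof.
rewrite /runs => h; remember (node k ts) as T eqn:ET; remember (TVar q : atm) as V eqn:EV.
elim: h ts ET EV => [x|x y z hxy hyz IH] ts ET EV hN; first by subst x; case: k EV hN.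
subst z.
case: hxy ET hN hyz IH => [u v hr|f' l1 u v l2 hs|o' l1 u v l2 hs] ET hN hyz IH.
- move/run_rootP: hr ET hN hyz => [l q0 m s' _ ha _|k' qs q0 h|p q0 _] ET hN hyz.
  + by rewrite hN in ha.
  + have [<- ets] := node_inj ET; subst ts.
    exists qs; split; first exact: runs_states_refl.
    by apply: star_step hyz; apply/at_root/run_rootP; apply: RootNode h.
  + by case: (k) ET.
- move: ET; case: k IH hN => k0 //= IH hN -[ef ets]; subst k0 ts.
  have [qs [h1 h2]] := IH (l1 ++ v :: l2) erefl erefl erefl.
  by exists qs; split => //; apply: Forall2_mid h1 _ => p hp; exact: star_step hs hp.
- move: ET; case: k IH hN => k0 //= IH hN -[ef ets]; subst k0 ts.
  have hN' : aeval (TOp o' (l1 ++ v :: l2)) = None.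
    by apply: (run_aeval_None (X:=X) (s := TOp o' (l1 ++ u :: l2))); constructor.
  have [qs [h1 h2]] := IH (l1 ++ v :: l2) erefl erefl hN'.
  by exists qs; split => //; apply: Forall2_mid h1 _ => p hp; exact: star_step hs hp.
Qed.

Lemma runs_hole (X Y : lta Ab) k l1 t l2 q :
  trans_in (delta X) Y ->
  runs X (node k (l1 ++ t :: l2)) q -> aeval (node k (l1 ++ t :: l2)) = None ->
  exists2 p, runs X t p & forall b, runs Y b p -> runs Y (node k (l1 ++ b :: l2)) q.
Proof.
move=> hXY hr hN; have [qs [hq1 hq2]] := runs_node_inv hr hN.
have [qs1 [p [qs2 [eqs [h1 [hp h2]]]]]] := Forall2_cat_mid_inv hq1; subst qs.
have lift l l' : List.Forall2 (runs X) l l' -> List.Forall2 (runs Y) l l'.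
  by apply: List.Forall2_impl => ? ?; apply: runs_mono.
exists p => // b hb; apply: runs_node (runs_mono hXY hq2).
by apply: Forall2_cat (lift _ _ h1) _; constructor; last exact: lift.
Qed.

End Runs.

Arguments node_tr {Dm Ab}.

Section Covering.
Variables (Dm : domain) (Ab : absdom Dm).
Local Notation ct := (cterm Dm).
Local Notation atm := (aterm Ab).
Local Open Scope order_scope.

Definition abs_head (k : passive Dm + oper Dm) : passive Dm + aop Dm :=
  match k with inl f => inl f | inr o => inr (AO o) end.

Definition covered (X : lta Ab) (c : ct) (a : atm) : Prop :=
  exists b, ground b /\ wfa b /\ cleq c b /\ star (run X) b a.

Lemma lang_qP (X : lta Ab) q c : lang_q X q c <-> [/\ ground c, wfc c & covered X c (TVar q)].
Proof.
split; first by move=> [g [w [b hb]]]; split => //; exists b.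
by move=> [g w [b hb]]; do 2 split => //; exists b.
Qed.

Lemma lang_q_ceval (X : lta Ab) q c : lang_q X q c -> lang_q X q (ceval c).
Proof.
move=> /lang_qP [g w [b [gb [wb [cb rb]]]]].
apply/lang_qP; split; [exact: ceval_ground|exact: ceval_wfc|].
by exists b; do !split => //; apply: cleq_ceval.
Qed.

Lemma cleq_node k cs bs :
  List.Forall2 (@cleq Dm Ab) cs bs -> cleq (node k cs) (node (abs_head k) bs).
Proof. by case: k => ? h; constructor. Qed.

Lemma covered_node (X : lta Ab) k cs as' : wfc (node k cs) ->
  List.Forall2 (covered X) cs as' -> covered X (node k cs) (node (abs_head k) as').
Proof.
rewrite /wfc wf_node => /andP [/eqP hs _] hF.
have [bs [e1 [e2 e3]]] : exists bs, List.Forall2 (@cleq Dm Ab) cs bs /\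
    List.Forall2 (star (run X)) bs as' /\ forall b, List.In b bs -> ground b /\ wfa b.
  elim: hF {hs} => [|c a l l' [b [g [w [h1 h2]]]] _ [bs [e1 [e2 e3]]]].
    by exists [::]; do !split => //; constructor.
  exists (b :: bs); split; first by constructor.
  by split; [constructor|move=> b' [<-|/e3]].
exists (node (abs_head k) bs); split; first by apply/ground_node => b /e3 [].
split.
  rewrite /wfa wf_node -(Forall2_size e1) hs; apply/andP; split; first by case: (k).
  by apply: all_In => b /e3 [].
by split; [apply: cleq_node|apply: star_run_node].
Qed.

Lemma covered_evals (X : lta Ab) c (a a' : atm) m n : covered X c a -> aeval a = Some m ->
  aeval a' = Some n -> m <= n -> covered X c a'.
Proof.
move=> [b [_ [_ [hc hs]]]] ha ha' hmn.
have [ga _] := aeval_ground_wf ha.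
have eb := star_run_ground hs ga; subst b.
have [d [hd hdm]] := cleq_aeval hc ha.
have [ga' wa'] := aeval_ground_wf ha'.
exists a'; do !split => //; last by constructor.
exact: (CleEval hd ha' (le_trans hdm hmn)).
Qed.

Lemma inst_node k rs (s : nat -> Defs.sval Ab) :
  inst (node k rs) s = node (abs_head k) (map (fun r => inst r s) rs).
Proof. by case: k => ?; rewrite /inst /abs /= -map_comp. Qed.

Lemma wfc_tsub_args (th : nat -> ct) k rs r :
  wfc (tsub th (node k rs)) -> List.In r rs -> wfc (tsub th r).
Proof.
move=> hw hr; have : wfc (node k (map (tsub th) rs)) by case: k hw.
rewrite /wfc wf_node => /andP [_ ha].
by apply: (In_all ha); apply/In_map_iff; exists r.
Qed.

Lemma aleq_node_inv k (ss : seq atm) t : aleq (node k ss) t ->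
  (exists m n, [/\ aeval (node k ss) = Some m, aeval t = Some n & m <= n]) \/
  exists2 ts, t = node k ts & List.Forall2 (@aleq Dm Ab) ss ts.
Proof.
case: k => ? h; inversion h; subst; first [by left; exists m, n | by right; exists ts].
Qed.

Section Instance.
Variables (X : lta Ab) (th : nat -> ct) (s : nat -> Defs.sval Ab).

Lemma covered_inst (r : ct) : wfc (tsub th r) ->
  (forall x, x \in vars r -> covered X (th x) (sval_term (s x))) ->
  covered X (tsub th r) (inst r s).
Proof.
elim/term_node_ind: r => [x|k rs /List.Forall_forall IH|d] hw H.
- by apply: H; rewrite inE.
- rewrite inst_node tsub_node; apply: covered_node; first by rewrite -tsub_node.
  apply: Forall2_map_diag => r hr; apply: (IH _ hr (wfc_tsub_args hw hr)) => x hx.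
  by apply: H; rewrite vars_node; apply/mem_flatten_vars; exists r.
- exists (TCst (alpha1 Ab d)); do !split => //; last by constructor.
  by apply: (@CleEval Dm Ab (TCst d) _ d (alpha1 Ab d)).
Qed.

Lemma covered_aleq (r : ct) a' : wfc (tsub th r) ->
  (forall x, x \in vars r -> covered X (th x) (sval_term (s x))) ->
  aleq (inst r s) a' -> covered X (tsub th r) a'.
Proof.
elim/term_node_ind: r a' => [x|k rs /List.Forall_forall IH|d] a' hw H h.
- have Hx := H x (mem_head _ _); move: h Hx; rewrite /inst /=.
  case: (s x) => [q|l] /= h Hx; inversion h as [? ? m n ha ha' hmn| | |]; subst => //.
  exact: covered_evals Hx ha ha' hmn.
- have HK := covered_inst hw H.
  move: h HK; rewrite inst_node => /aleq_node_inv [[m [n [ha ha' hmn]]]|[ts -> hF]] HK.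
    exact: covered_evals HK ha ha' hmn.
  rewrite tsub_node; apply: covered_node; first by rewrite -tsub_node.
  apply: (Forall2_map_l (f := tsub th)).
  apply: (Forall2_impl_In (Q := fun r t => covered X (tsub th r) t) (Forall2_map_inv hF)).
  move=> r t hr ht; apply: (IH _ hr t (wfc_tsub_args hw hr)) ht => x hx.
  by apply: H; rewrite vars_node; apply/mem_flatten_vars; exists r.
- have HK := covered_inst hw H; inversion h as [? ? m n ha ha' hmn| | |]; subst.
  exact: covered_evals HK ha ha' hmn.
Qed.

End Instance.

Definition matched_by (X : lta Ab) (th : nat -> ct) (l : ct) (q : nat) (sg : nat -> nat) :=
  runs X (tsub (fun x => TVar (sg x)) (abs Ab l)) q /\
  forall x, x \in vars l -> covered X (th x) (TVar (sg x)).

(* Left-linearity lets the state substitutions found for disjoint arguments be glued. *)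
Lemma match_args (X : lta Ab) (th : nat -> ct) (ls : seq ct) ts' qs :
  List.Forall (fun l => forall t' q, passive_only l -> uniq (vars l) ->
        cleq (tsub th l) t' -> ground t' -> wfa t' -> runs X t' q ->
        exists sg, matched_by X th l q sg) ls ->
  all (@passive_only _ _ _) ls -> uniq (flatten (map (@vars _ _ _) ls)) ->
  List.Forall2 (fun l t => cleq (tsub th l) t) ls ts' ->
  (forall b, List.In b ts' -> ground b /\ wfa b) ->
  List.Forall2 (runs X) ts' qs ->
  exists sg : nat -> nat,
    List.Forall2 (fun l p => runs X (tsub (fun x => TVar (sg x)) (abs Ab l)) p) ls qs /\
    forall x, x \in flatten (map (@vars _ _ _) ls) -> covered X (th x) (TVar (sg x)).
Proof.
elim: ls ts' qs => [|l ls IHl] ts' qs IH /=.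
  move=> _ _ h1 _ h2; inversion h1; subst; inversion h2; subst.
  by exists (fun _ => 0); split => //; constructor.
move=> /andP [pl pls]; rewrite cat_uniq => /and3P [ul hn uls] h1 hgw h2.
inversion h1 as [|? t ? ts1 hc hcs]; subst; inversion h2 as [|? p ? qs1 hr hrs]; subst.
inversion IH as [|? ? IHh IHt]; subst.
have [gt wt] := hgw t (or_introl erefl).
have [s1 [r1 k1]] := IHh t p pl ul hc gt wt hr.
have [s2 [r2 k2]] := IHl ts1 qs1 IHt pls uls hcs (fun b hb => hgw b (or_intror hb)) hrs.
exists (fun x => if x \in vars l then s1 x else s2 x); split.
- constructor.
  + by rewrite (tsub_ext (h := fun x => TVar (s1 x))) // => x; rewrite vars_tmap => ->.
  + apply: (Forall2_impl_In r2) => l' p' hl' hr'.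
    rewrite (tsub_ext (h := fun x => TVar (s2 x))) // => x; rewrite vars_tmap => hx.
    have hx2 : x \in flatten (map (@vars _ _ _) ls) by apply/mem_flatten_vars; exists l'.
    by case: ifP => // hxl; move/hasPn: hn => /(_ x hx2); rewrite hxl.
- move=> x; rewrite mem_cat; case hx: (x \in vars l) => /=; first by move=> _; apply: k1.
  exact: k2.
Qed.

Lemma match_lhs (X : lta Ab) (th : nat -> ct) (l : ct) t' q :
  passive_only l -> uniq (vars l) ->
  cleq (tsub th l) t' -> ground t' -> wfa t' -> runs X t' q ->
  exists sg, matched_by X th l q sg.
Proof.
elim/term_nested_ind: l t' q => [x|f ls IH|o ls IH|d] t' q //= hp hu hc hg hw hr.
- exists (fun _ => q); split; first by constructor.
  by move=> y; rewrite inE => /eqP ->; exists t'.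
- inversion hc as [? ? d m hce|? ? ts' hF|]; subst; first by [].
  have [qs [hq1 hq2]] := runs_node_inv (k := inl f) hr erefl.
  have hgw : forall b, List.In b ts' -> ground b /\ wfa b.
    move=> b hb; split; first exact: (proj1 (ground_node (inl f) _) hg).
    by move: hw => /andP [_ h]; apply: (In_all h).
  have [sg [h1 h2]] := match_args IH hp hu (Forall2_map_inv hF) hgw hq1.
  exists sg; split => //.
  rewrite /= -map_comp; apply: (runs_node (k := inl f)) hq2.
  exact: Forall2_map_l h1.
Qed.

End Covering.

Scheme norm_sub_mut := Induction for norm_sub Sort Prop
  with norm_list_mut := Induction for norm_list Sort Prop.
Combined Scheme norm_mut from norm_sub_mut, norm_list_mut.

Section Normalization.
Variables (Dm : domain) (Ab : absdom Dm) (A : lta Ab).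

Lemma norm_runs (Y : lta Ab) : trans_in (delta A) Y ->
  (forall a p N F, norm_sub A a p N F -> trans_in N Y -> runs Y a p) /\
  (forall ss ps N F, norm_list A ss ps N F -> trans_in N Y -> List.Forall2 (runs Y) ss ps).
Proof.
move=> hAY; apply: norm_mut => //.
- by move=> p _; constructor.
- by move=> s p _ _ h _; apply: runs_mono h.
- by move=> l p h; apply: runs_lat; apply: h; left.
- move=> f ss ps N F p _ IH /trans_in_cat [h1 h2].
  by apply: (runs_node (k := inl f)) (IH h1) _; apply: runs_node_tr; apply: h2; left.
- move=> o ss ps N F p _ IH /trans_in_cat [h1 h2].
  by apply: (runs_node (k := inr o)) (IH h1) _; apply: runs_node_tr; apply: h2; left.
- by move=> s ss p ps N Ns F Fs _ IH1 _ IH2 /trans_in_cat [h1 h2]; constructor; auto.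
Qed.

Lemma norm_root_runs (Y : lta Ab) a q N F : trans_in (delta A) Y ->
  norm_root A a q N F -> trans_in N Y -> runs Y a q.
Proof.
move=> hAY; case=> [p q'|l q'|f ss ps N' F' q' hn|o ss ps N' F' q' hn] hN.
- by apply: runs_eps; apply: hN; left.
- by apply: runs_lat; apply: hN; left.
- have [h1 h2] := trans_in_cat hN.
  apply: (runs_node (k := inl f)) ((norm_runs hAY).2 _ _ _ _ hn h1) _.
  by apply: runs_node_tr; apply: h2; left.
- have [h1 h2] := trans_in_cat hN.
  apply: (runs_node (k := inr o)) ((norm_runs hAY).2 _ _ _ _ hn h1) _.
  by apply: runs_node_tr; apply: h2; left.
Qed.

Definition tr_states (T : tr Ab) : seq nat :=
  match T with
  | TrF _ qs q | TrO _ qs q => q :: qs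
  | TrL _ q => [:: q]
  | TrE p q => [:: p; q]
  end.

Lemma tr_states_node_tr k qs q : tr_states (node_tr k qs q) = q :: qs.
Proof. by case: k. Qed.

Definition states_within (S : seq nat) (N : seq (tr Ab)) : Prop :=
  forall T, List.In T N -> forall r, r \in tr_states T -> r \in st A \/ r \in S.

Lemma states_within_cat S N1 N2 :
  states_within S N1 -> states_within S N2 -> states_within S (N1 ++ N2).
Proof. by move=> h1 h2 T /In_cat_iff [/h1|/h2]. Qed.

Lemma states_within_sub S S' N :
  {subset S <= S'} -> states_within S N -> states_within S' N.
Proof. by move=> hS h T hT r /(h T hT) [|/hS]; auto. Qed.

Lemma norm_states :
  (forall a p N F, norm_sub A a p N F -> {subset vars a <= st A} ->
     (p \in st A \/ p \in F) /\ states_within F N) /\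
  (forall ss ps N F, norm_list A ss ps N F -> {subset flatten (map (@vars _ _ _) ss) <= st A} ->
     (forall p, p \in ps -> p \in st A \/ p \in F) /\ states_within F N).
Proof.
have node_case F N ps p T : (forall p, p \in ps -> p \in st A \/ p \in F) ->
    states_within F N -> {subset tr_states T <= p :: ps} ->
    states_within (p :: F) (N ++ [:: T]).
  move=> hps hN hT; apply: states_within_cat.
    by apply: states_within_sub hN => r hr; rewrite inE hr orbT.
  move=> T' [<-|[]] r /hT; rewrite inE => /orP [/eqP ->|/hps [|hr]]; [|by left|].
  - by right; rewrite inE eqxx.
  - by right; rewrite inE hr orbT.
apply: norm_mut.
- by move=> p h; split => [|T []]; left; apply: h; rewrite inE.
- by move=> s p _ hp _ _; split => [|T []]; left.
- move=> l p _; split; first by right; rewrite inE.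
  by move=> T [<-|[]] r; rewrite /= mem_seq1 => /eqP ->; right.
- move=> f ss ps N F p _ IH hv; have [h1 h2] := IH hv.
  split; first by right; rewrite inE eqxx.
  by apply: node_case h1 h2 _ => r.
- move=> o ss ps N F p _ IH hv; have [h1 h2] := IH hv.
  split; first by right; rewrite inE eqxx.
  by apply: node_case h1 h2 _ => r.
- by move=> _; split => // T [].
- move=> s ss p ps N Ns F Fs _ IH1 _ IH2 hv.
  have [h1 h2] : (p \in st A \/ p \in F) /\ states_within F N.
    by apply: IH1 => v hv'; apply: hv; rewrite /= mem_cat hv'.
  have [h3 h4] : (forall p, p \in ps -> p \in st A \/ p \in Fs) /\ states_within Fs Ns.
    by apply: IH2 => v hv'; apply: hv; rewrite /= mem_cat hv' orbT.
  have sub1 : {subset F <= F ++ Fs} by move=> r hr; rewrite mem_cat hr.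
  have sub2 : {subset Fs <= F ++ Fs} by move=> r hr; rewrite mem_cat hr orbT.
  split.
  + move=> p'; rewrite inE => /orP [/eqP ->|/h3 [->|/sub2 ->]]; auto.
    by case: h1 => [->|/sub1 ->]; auto.
  + by apply: states_within_cat; [apply: states_within_sub h2|apply: states_within_sub h4].
Qed.

Lemma norm_root_states a q' N F : norm_root A a q' N F -> {subset vars a <= st A} ->
  states_within (q' :: F) N.
Proof.
case=> [p q|l q|f ss ps N' F' q hn|o ss ps N' F' q hn] hv T.
- move=> [<-|[]] r hr; rewrite /= !inE in hr; case/orP: hr => /eqP ->.
  + by left; apply: hv; rewrite inE.
  + by right; apply: mem_head.
- by move=> [<-|[]] r; rewrite /= mem_seq1 => /eqP ->; right.
all: have [k1 k2] := norm_states.2 _ _ _ _ hn hv.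
all: move=> /In_cat_iff [hT|[<-|[]]] r hr.
all: try by case: (k2 T hT r hr) => [|hF]; [left|right; rewrite inE hF orbT].
all: rewrite /= inE in hr; case/orP: hr => [/eqP ->|/k1 [|hF]]; first by right; apply: mem_head.
all: by [left|right; rewrite inE hF orbT].
Qed.

End Normalization.

Section StatesClosed.
Variables (Dm : domain) (Ab : absdom Dm).

Definition states_closed (X : lta Ab) : Prop :=
  forall T, List.In T (delta X) -> forall p, p \in tr_states T -> p \in st X.

Variable X : lta Ab.
Hypothesis HX : states_closed X.

Lemma run_vars_fwd s t : run X s t -> forall p, p \in vars t -> p \in vars s \/ p \in st X.
Proof.
elim=> [u v /run_rootP hr|f l1 u v l2 _ IH|o l1 u v l2 _ IH] p /=.
- case: hr => [l q m s' h1 _ _|k qs q h1|p' q h1]; rewrite /= inE => /eqP ->; right;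
    by apply: (HX h1); rewrite ?tr_states_node_tr !inE eqxx ?orbT.
all: by rewrite !mem_vars_cat => /orP [->|/IH [->|]]; auto; rewrite orbT; auto.
Qed.

Lemma run_vars_bwd s t : run X s t -> forall p, p \in vars s -> p \in vars t \/ p \in st X.
Proof.
elim=> [u v /run_rootP hr|f l1 u v l2 _ IH|o l1 u v l2 _ IH] p /=.
- case: hr => [l q m s' h1 ha _|k qs q h1|p' q h1] hp.
  + have [gs _] := aeval_ground_wf ha.
    by move: (proj1 (ground_iff s') gs p); rewrite hp.
  + right; apply: (HX h1); rewrite tr_states_node_tr inE; apply/orP; right.
    move: hp; rewrite vars_node => /mem_flatten_vars [b [/In_map_iff [x [<- hx]] hb]].
    by move: hb; rewrite inE => /eqP ->; apply: In_mem.
  + by move: hp; rewrite inE => /eqP ->; right; apply: (HX h1); rewrite inE eqxx.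
all: by rewrite !mem_vars_cat => /orP [->|/IH [->|]]; auto; rewrite orbT; auto.
Qed.

Lemma star_run_vars_bwd s t : star (run X) s t ->
  forall p, p \in vars s -> p \in vars t \/ p \in st X.
Proof.
elim=> [|x y z h _ IH] p; first by left.
by move=> /(run_vars_bwd h) [/IH|]; auto.
Qed.

Lemma star_run_vars_fwd s t : star (run X) s t ->
  forall p, p \in vars t -> p \in vars s \/ p \in st X.
Proof.
elim=> [|x y z h _ IH] p; first by left.
by move=> /IH [/(run_vars_fwd h)|]; auto.
Qed.

Lemma runs_st t q : ground t -> runs X t q -> q \in st X.
Proof.
move=> hg hr; case: (star_run_vars_fwd hr (mem_head q [::])) => // h.
by move: (proj1 (ground_iff t) hg q); rewrite h.
Qed.

End StatesClosed.

Section StatesClosedPreservation.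
Variables (Dm : domain) (Ab : absdom Dm).

Lemma is_lta_states_closed (A : lta Ab) : is_lta A -> states_closed A.
Proof.
move=> [_ h] T hT p; have := h T hT.
case: T {hT} => [f qs q|o qs q|l q|p' q] /=.
- by move=> [_ /andP [hq /allP hqs]]; rewrite inE => /orP [/eqP ->|/hqs].
- by move=> [_ /andP [hq /allP hqs]]; rewrite inE => /orP [/eqP ->|/hqs].
- by move=> hq; rewrite inE => /eqP ->.
- by move=> /andP [h1 h2]; rewrite !inE => /orP [] /eqP ->.
Qed.

Lemma eval_add_states_closed (X Y : lta Ab) : eval_add X Y -> states_closed X -> states_closed Y.
Proof.
move=> [o [qs [q [ls [v [m [h1 [_ [_ [_ [_ ->]]]]]]]]]]] hI T /= /In_cat_iff [hT|[<-|[]]] p hp.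
- exact: hI hT p hp.
- by move: hp; rewrite inE => /eqP ->; apply: (hI _ h1); rewrite inE eqxx.
Qed.

Lemma eval_clos_states_closed (X Y : lta Ab) : eval_clos X Y -> states_closed X -> states_closed Y.
Proof. by move=> [h _]; apply: star_invariant h; apply: eval_add_states_closed. Qed.

Lemma rename_states_closed (X : lta Ab) g : states_closed X -> states_closed (rename_lta g X).
Proof.
move=> hI T' /= /In_map_iff [T [<- hT]] p.
have H r : r \in tr_states T -> g r \in map g (st X) by move/(hI T hT); apply: map_f.
case: T hT H => [f qs q|o qs q|l q|p' q] _ H /=.
- by rewrite inE => /orP [/eqP ->|/mapP [r hr ->]]; apply: H; rewrite inE ?eqxx ?hr ?orbT.
- by rewrite inE => /orP [/eqP ->|/mapP [r hr ->]]; apply: H; rewrite inE ?eqxx ?hr ?orbT.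
- by rewrite inE => /eqP ->; apply: H; rewrite inE.
- by rewrite !inE => /orP [] /eqP ->; apply: H; rewrite !inE eqxx ?orbT.
Qed.

Lemma merge_nf_states_closed E (X Y : lta Ab) : merge_nf E X Y -> states_closed X -> states_closed Y.
Proof.
move=> [h _]; apply: star_invariant h => A B [q [q' [_ [->|->]]]];
  exact: rename_states_closed.
Qed.

Section OneStep.
Variables (R : seq (rule Dm)) (Solve : solver Ab).
Hypotheses (HR : left_linear_ctrs R) (HS : solver_ok R Solve).

(* Unconstrained variables keep the states found by matching, constrained ones become
   lattice constants. *)
Lemma inst_vars_st (A : lta Ab) rl q s' : List.In rl R -> states_closed A -> q \in st A ->
  in_omega Solve A rl q s' -> {subset vars (inst (rhs rl) s') <= st A}.
Proof.
move=> hin HI hq [sg [hm [hs' _]]] p /vars_tsub [x [hx hp]].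
rewrite vars_tmap in hx.
have [[_ [_ [_ [_ [hsub _]]]]] _] := HR hin.
have [h1 h2] := HS.1 sg A (conds rl) s' hs' x.
case hxc: (x \in cvars (conds rl)); first by have [l hl] := h1 hxc; rewrite hl in hp.
move: hp; rewrite (h2 (negbT hxc)) /= inE => /eqP ->.
have : sg x \in vars (tsub (fun x => TVar (sg x)) (abs Ab (lhs rl))).
  by apply/vars_tsub; exists x; rewrite vars_tmap (hsub x hx) inE.
by move/(star_run_vars_bwd HI hm) => [|//]; rewrite inE => /eqP ->.
Qed.

Lemma CR_states_closed (A B : lta Ab) : CR_step R Solve A B -> states_closed A -> states_closed B.
Proof.
move=> [cps [hc1 [_ [_ [_ [_ ->]]]]]] HI T /= /In_cat_iff [hT|/In_flatten [s0 [/In_map_iff [c [<- hc]] hT]]] p hp.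
  by rewrite mem_cat (HI T hT p hp).
have hfresh r : r \in cp_new c :: cp_fresh c ->
    r \in st A ++ flatten (map (fun c => cp_new c :: cp_fresh c) cps).
  move=> hr; rewrite mem_cat; apply/orP; right; apply: In_mem; apply/In_flatten.
  exists (cp_new c :: cp_fresh c); split; last exact: mem_In.
  by apply/In_map_iff; exists c.
have [rl [hrl [hq [hom hn]]]] := hc1 c hc.
have hin := List.nth_error_In R _ hrl.
move/In_cat_iff: hT => [hT|[eT|[]]].
  case: (norm_root_states hn (inst_vars_st hin HI hq hom) hT hp) => [h|/hfresh //].
  by rewrite mem_cat h.
move: hp; rewrite -eT /= !inE => /orP [/eqP ->|/eqP ->]; first by apply: hfresh; rewrite inE eqxx.
by rewrite mem_cat hq.
Qed.

End OneStep.

Lemma comp_states_closed R E Solve (X Y : lta Ab) :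
  left_linear_ctrs R -> solver_ok R Solve ->
  comp_step R E Solve X Y -> states_closed X -> states_closed Y.
Proof.
move=> HR HS [A1 [A2 [A3 [h1 [h2 [h3 h4]]]]]] /(eval_clos_states_closed h1).
by move=> /(CR_states_closed HR HS h2) /(merge_nf_states_closed h3) /(eval_clos_states_closed h4).
Qed.

End StatesClosedPreservation.

Section Acceptance.
Variables (Dm : domain) (Ab : absdom Dm).

Definition accepted_into (X Y : lta Ab) : Prop :=
  forall b q, ground b -> runs X b q -> q \in fin X -> exists2 q', runs Y b q' & q' \in fin Y.

Lemma accepted_into_refl X : accepted_into X X.
Proof. by move=> b q _ hr hq; exists q. Qed.

Lemma accepted_into_trans X Y Z : accepted_into X Y -> accepted_into Y Z -> accepted_into X Z.
Proof.
move=> h1 h2 b q gb hr hf; have [q1 r1 f1] := h1 b q gb hr hf.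
exact: h2 b q1 gb r1 f1.
Qed.

Lemma accepted_into_sub (X Y : lta Ab) :
  trans_in (delta X) Y -> {subset fin X <= fin Y} -> accepted_into X Y.
Proof. by move=> hd hf b q _ hr hq; exists q; [apply: runs_mono hd hr|apply: hf]. Qed.

Lemma accepted_into_star (P : lta Ab -> lta Ab -> Prop) X Y :
  (forall X Y, P X Y -> accepted_into X Y) -> star P X Y -> accepted_into X Y.
Proof.
move=> h; elim=> [Z|x y z hxy _ IH]; first exact: accepted_into_refl.
exact: accepted_into_trans (h _ _ hxy) IH.
Qed.

Lemma trans_in_extend (X : lta Ab) N : trans_in (delta X) (LTA (st X) (fin X) (delta X ++ N)).
Proof. by move=> T hT /=; apply/In_cat_iff; left. Qed.

Lemma eval_clos_accepted_into X Y : eval_clos X Y -> accepted_into X Y.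
Proof.
move=> [h _]; apply: accepted_into_star h => {}X {}Y.
move=> [o [qs [q [ls [v [m [_ [_ [_ [_ [_ ->]]]]]]]]]]].
by apply: accepted_into_sub; [apply: trans_in_extend|].
Qed.

Lemma CR_delta R Solve (X Y : lta Ab) : CR_step R Solve X Y -> trans_in (delta X) Y.
Proof. by move=> [cps [_ [_ [_ [_ [_ ->]]]]]]; apply: trans_in_extend. Qed.

Lemma CR_fin R Solve (X Y : lta Ab) : CR_step R Solve X Y -> fin Y = fin X.
Proof. by move=> [cps [_ [_ [_ [_ [_ ->]]]]]]. Qed.

Lemma run_rename (X : lta Ab) g s t :
  run X s t -> run (rename_lta g X) (tsub (TVar \o g) s) (tsub (TVar \o g) t).
Proof.
elim=> [u v /run_rootP hr|f l1 u v l2 _ IH|o l1 u v l2 _ IH]; last 2 first.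
- by rewrite /= !map_cat /=; constructor.
- by rewrite /= !map_cat /=; constructor.
apply/at_root/run_rootP; case: hr => [l q m s' h1 ha hm|k qs q h1|p q h1] /=.
- have [gs _] := aeval_ground_wf ha; rewrite tsub_id_ground //.
  by apply: RootLat ha hm; apply/In_map_iff; exists (TrL l q).
- rewrite tsub_node -map_comp (map_comp TVar g); apply: RootNode.
  by apply/In_map_iff; exists (node_tr k qs q); case: k h1.
- by apply: RootEps; apply/In_map_iff; exists (TrE Ab p q).
Qed.

Lemma rename_accepted_into (X : lta Ab) g : accepted_into X (rename_lta g X).
Proof.
move=> b q gb hr hf; exists (g q); last exact: map_f.
by have := star_map (@run_rename X g) hr; rewrite tsub_id_ground.
Qed.

Lemma merge_nf_accepted_into E X Y : merge_nf E X Y -> accepted_into X Y.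
Proof.
move=> [h _]; apply: accepted_into_star h => {}X {}Y [q [q' [_ [->|->]]]];
  exact: rename_accepted_into.
Qed.

Lemma comp_accepted_into R E Solve X Y : comp_step R E Solve X Y -> accepted_into X Y.
Proof.
move=> [A1 [A2 [A3 [h1 [h2 [h3 h4]]]]]].
apply: accepted_into_trans (eval_clos_accepted_into h1) _.
apply: accepted_into_trans (accepted_into_sub (CR_delta h2) _) _.
  by rewrite (CR_fin h2).
exact: accepted_into_trans (merge_nf_accepted_into h3) (eval_clos_accepted_into h4).
Qed.

Lemma lta_eq_accepted_into (B X : lta Ab) : lta_eq B X -> accepted_into B X.
Proof. by move=> [_ [hf hd]]; apply: accepted_into_sub => [T /hd //|q]; rewrite hf. Qed.

Lemma lang_accepted_into X Y t : accepted_into X Y -> lang X t -> lang Y t.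
Proof.
move=> h [q [hq [gt [wt [b [gb [wb [cb rb]]]]]]]].
have [q' r' f'] := h b q gb rb hq.
by exists q'; do 3 split => //; exists b.
Qed.

End Acceptance.

Section RewriteStep.
Variables (Dm : domain) (Ab : absdom Dm).
Variables (R : seq (rule Dm)) (Solve : solver Ab) (A1 A2 : lta Ab).
Hypotheses (HR : left_linear_ctrs R) (HS : solver_ok R Solve).
Hypotheses (HCR : CR_step R Solve A1 A2) (HI : states_closed A1).

Lemma solve_rhs rl th q sg : List.In rl R -> (forall x, ground (th x)) ->
  List.Forall (cond_holds th) (conds rl) -> wfc (tsub th (lhs rl)) ->
  matched_by A1 th (lhs rl) q sg ->
  exists2 s', List.In s' (Solve sg A1 (conds rl)) &
    forall x, x \in vars (rhs rl) -> covered A1 (th x) (sval_term (s' x)).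
Proof.
move=> hin hth hcond hws [hm hK].
have [[_ [_ [_ [_ [hsub _]]]]] _] := HR hin.
have hlang x : x \in vars (lhs rl) -> lang_q A1 (sg x) (th x).
  by move=> hx; apply/lang_qP; split; [apply: hth|apply: wf_tsub_inv hx hws|apply: hK].
have [s' [hs' hcv]] := HS.2 rl hin A1 q sg th hm hlang hcond.
exists s' => // x hx; have [h1 h2] := HS.1 sg A1 (conds rl) s' hs' x.
case hxc: (x \in cvars (conds rl)).
- have [l [d [e1 [e2 e3]]]] := hcv x hxc; rewrite e1 /=.
  exists (TCst l); do !split => //; last by constructor.
  exact: (@CleEval Dm Ab (th x) (TCst l) d l e2 (erefl _) e3).
- by rewrite (h2 (negbT hxc)) /=; apply: hK; apply: hsub.
Qed.

(* The completion step adds [Norm(r s' ->* q')] and [q' -> q] for every [s'] in [Omega]. *)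
Lemma omega_runs rl q s' : List.In rl R -> q \in st A1 ->
  in_omega Solve A1 rl q s' -> runs A2 (inst (rhs rl) s') q.
Proof.
move=> hin hq hom.
have [[_ [_ [_ [_ [hsub _]]]]] _] := HR hin.
have [i hi] := List.In_nth_error R rl hin.
move: HCR => [cps [hc1 [hc2 [_ [_ [_ eB]]]]]].
have [c [hcin [e1 [e2 e3]]]] := hc2 i rl q s' hi hq hom.
have [rl' [hrl' [_ [_ hn]]]] := hc1 c hcin.
rewrite -e1 hi in hrl'; case: hrl' => erl; subst rl'.
have einst : inst (rhs rl) (cp_sub c) = inst (rhs rl) s'.
  by apply: tsub_ext => x; rewrite vars_tmap => hx; rewrite (e3 rl hi x (hsub x hx)).
have hinA2 : trans_in (cp_tr c ++ [:: TrE Ab (cp_new c) (cp_q c)]) A2.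
  move=> T hT; rewrite eB /=; apply/In_cat_iff; right; apply/In_flatten.
  by exists (cp_tr c ++ [:: TrE Ab (cp_new c) (cp_q c)]); split => //; apply/In_map_iff; exists c.
have [htr heps] := trans_in_cat hinA2.
apply: star_trans (_ : runs A2 _ (cp_new c)) _.
  by rewrite -einst; apply: norm_root_runs (CR_delta HCR) hn htr.
by apply: runs_eps; rewrite e2; apply: heps; left.
Qed.

Lemma rew_root_lang_q s u q : rew_root R s u -> lang_q A1 q s -> lang_q A2 q u.
Proof.
move=> [rl [th [hin [hth [-> [hcond ->]]]]]] /lang_qP [hgs hws [t' [hg [hw [hc hr]]]]].
have [[_ [hpo [_ [hwr [hsub _]]]]] hul] := HR hin.
have [sg hmatch] := match_lhs hpo hul hc hg hw hr.
have [s' hs' hH] := solve_rhs hin hth hcond hws hmatch.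
have hwu : wfc (tsub th (rhs rl)).
  by apply: wf_tsub => // x hx; apply: (wf_tsub_inv (hsub x hx) hws).
apply/lang_qP; split => //; first by apply: ground_tsub => x _; apply: hth.
(* Either [r s'] is already covered in [A1], or [s'] is in [Omega] and the step adds it. *)
case: (classic (exists s'', aleq (inst (rhs rl) s') (inst (rhs rl) s'') /\
                            runs A1 (inst (rhs rl) s'') q)) => [[s'' [ha hr'']]|hno].
- have [b [gb [wb [cb rb]]]] := covered_aleq hwu hH ha.
  exists b; do !split => //.
  by apply: runs_mono (CR_delta HCR) _; apply: star_trans rb hr''.
- have hom : in_omega Solve A1 rl q s' by exists sg; case: hmatch.
  have [b [gb [wb [cb rb]]]] := covered_inst hwu hH.
  exists b; do !split => //; apply: star_trans (runs_mono (CR_delta HCR) rb) _.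
  exact: omega_runs hin (runs_st HI hg hr) hom.
Qed.

Lemma ceval_redex s u : at_pos (rew_root R) s u -> forall d, ceval s <> TCst d.
Proof.
elim=> [s0 u0 hr|f l1 s0 u0 l2 _ IH|o l1 s0 u0 l2 _ IH] d //=.
- move: hr => [rl [th [hin [_ [-> _]]]]].
  have [[hnv [hpo _]] _] := HR hin.
  by case: (lhs rl) hnv hpo.
- case E: (all_some _) => [ds|] //; case: ifP => // _ [ed].
  have hF := Forall2_map_inv (proj1 (map_Some_Forall2 _ _ _) (all_some_inv E)).
  have [m1 [v [m2 [_ [_ [h _]]]]]] := Forall2_cat_mid_inv hF.
  by move: h; case E2: (ceval s0) => //= [d0] _; apply: (IH d0).
Qed.

Lemma cleq_node_inv k cs t' : cleq (node k cs) t' -> (forall d, ceval (node k cs) <> TCst d) ->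
  exists2 ts', t' = node (abs_head k) ts' & List.Forall2 (@cleq Dm Ab) cs ts'.
Proof.
case: k => [f|o] h hN; inversion h as [? ? d m hd| ? ? ts' hF|? ? ts' hF]; subst.
all: by [case: (hN d) | exists ts'].
Qed.

Lemma lang_q_hole k l1 s0 u0 l2 q :
  (forall p, lang_q A1 p s0 -> lang_q A2 p u0) ->
  (forall d, ceval (node k (l1 ++ s0 :: l2)) <> TCst d) ->
  lang_q A1 q (node k (l1 ++ s0 :: l2)) -> lang_q A2 q (node k (l1 ++ u0 :: l2)).
Proof.
move=> IH hN /lang_qP [hgs hws [t' [hg [hw [hc hr]]]]].
have [ts' et' hF] := cleq_node_inv hc hN; subst t'.
have [m1 [t0 [m3 [ets [hF1 [hc0 hF3]]]]]] := Forall2_cat_mid_inv hF; subst ts'.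
have hNa : aeval (node (abs_head k) (m1 ++ t0 :: m3)) = None.
  case E: aeval => [m|] //.
  by have [d [hd _]] := cleq_aeval hc E; case: (hN d).
have [p hr0 hfill] := runs_hole (CR_delta HCR) hr hNa.
have /lang_qP [gu0 wu0 [b0 [gb0 [wb0 [cb0 rb0]]]]] : lang_q A2 p u0.
  apply: IH; apply/lang_qP; split; [exact: ground_hole hgs|exact: wf_hole hws|].
  by exists t0; do !split => //; [exact: ground_hole hg|exact: wf_hole hw].
apply/lang_qP; split; [exact: ground_fill hgs gu0|exact: wf_fill hws wu0|].
exists (node (abs_head k) (m1 ++ b0 :: m3)); do !split.
- exact: ground_fill hg gb0.
- exact: wf_fill hw wb0.
- by apply: cleq_node; apply: Forall2_cat => //; constructor.
- exact: hfill.
Qed.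

Lemma rewrite_lang_q s u q : at_pos (rew_root R) s u -> lang_q A1 q s -> lang_q A2 q u.
Proof.
move=> hpos; elim: hpos q => [s0 u0 h|f l1 s0 u0 l2 hp IH|o l1 s0 u0 l2 hp IH] q.
- exact: rew_root_lang_q.
- by apply: (lang_q_hole (k := inl f)) => // d.
- by apply: (lang_q_hole (k := inr o)) => //; apply: ceval_redex (at_op o l1 l2 hp).
Qed.

End RewriteStep.

Lemma lang_ctrs_closed (Dm : domain) (Ab : absdom Dm) R E Solve (Astar B : lta Ab) :
  left_linear_ctrs R -> solver_ok R Solve -> states_closed Astar ->
  comp_step R E Solve Astar B -> lta_eq B Astar ->
  forall s t, lang Astar s -> ctrs_step R s t -> lang Astar t.
Proof.
move=> HR HS HI [A1 [A2 [A3 [h1 [h2 [h3 h4]]]]]] heq s t hs [u [hpos ->]].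
have [q [hq hsq]] : lang A1 s := lang_accepted_into (eval_clos_accepted_into h1) hs.
have huq := rewrite_lang_q HR HS h2 (eval_clos_states_closed h1 HI) hpos hsq.
have hu : lang A2 (ceval u) by exists q; split; [rewrite (CR_fin h2)|apply: lang_q_ceval].
apply: lang_accepted_into hu; apply: accepted_into_trans (merge_nf_accepted_into h3) _.
exact: accepted_into_trans (eval_clos_accepted_into h4) (lta_eq_accepted_into heq).
Qed.

Theorem mainTheorem6 (Dm : domain) (Ab : absdom Dm)
    (R : seq (rule Dm)) (E : seq (approx_eq Dm)) (Solve : solver Ab)
    (A Astar : lta Ab) :
  left_linear_ctrs R ->
  linear_eqs E ->
  is_lta A ->
  solver_ok R Solve ->
  completion_terminates R E Solve A Astar ->
  forall t, reach R (lang A) t -> lang Astar t.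
Proof.
move=> HR _ HA HS [k [As [h0 [hstep [hk [B [hB heq]]]]]]] t [s [hs hstar]].
have inv n : n <= k -> states_closed (As n) /\ accepted_into A (As n).
  elim: n => [|n IH] hn; first by rewrite h0; split; [apply: is_lta_states_closed|apply: accepted_into_refl].
  have [I1 T1] := IH (ltnW hn).
  split; first exact: comp_states_closed HR HS (hstep n hn) I1.
  exact: accepted_into_trans T1 (comp_accepted_into (hstep n hn)).
have [HI HT] := inv k (leqnn k); rewrite hk in HI HT.
elim: hstar (lang_accepted_into HT hs) => // x y z hxy _ IH hx.
by apply: IH; apply: lang_ctrs_closed HR HS HI hB heq _ _ hx hxy.
Qed.
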